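(* Fix $\beta>0$ and $0<t_0<t<\infty$. Let $(C_n)_{n\ge1}$ be the solution on $[t_0,t]$ of $$C_1\equiv1,\qquad \dot C_n=(n-1)B\,C_n+\frac{n\Gamma}{2}\sum_{j=1}^{n-1}C_jC_{n-j}\quad(n\ge2),\qquad C_n(t_0)=0\ (n\ge2)$$ (the coefficient equations of $\Theta_t=\Gamma(z^2\Theta^2)_z+Bz\Theta_z$, $\Theta(t_0,\cdot)=1$), and set $\Theta(t,z)=\sum_{n\ge1}C_n(t)z^{n-1}$. Then for every $k\in\mathbb{N}$ and every $z\ge0$ with $e\,z\,\tau_k(t_0,t)<1$, $$\Theta(t,z)\le\frac{-1}{\tau_k(t_0,t)\,z}\,W\!\left(-\tau_k(t_0,t)\,z\right),\qquad \tau_k(t_0,t)=\int_{t_0}^t\Gamma(s)\exp\!\Big(\frac{k+1}{k}\int_s^tB(s')\,ds'\Big)ds .$$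
   Context: $g(s)=-\frac{s}{4\pi}\int_s^\infty K_0'''(r)\frac{r}{\sqrt{r^2-s^2}}dr$ for $s>0$ (a positive function), $K_0$ the modified Bessel function of the second kind of order $0$. $\Gamma(t)=\frac{\beta\pi}{4}t^2g(t)$ and $B(t)=\frac{\beta}{2}g(t)$. $W$ is the principal branch of the Lambert $W$ function, with $-W(-x)/x=\sum_{n\ge1}\frac{n^{n-1}}{n!}x^{n-1}$ for $0\le x\le1/e$ (value $1$ at $x=0$). *)

From Stdlib Require Import Reals Lra ClassicalEpsilon.
Open Scope R_scope.

Definition RInt (f : R -> R) (a b : R) : R :=
  epsilon (inhabits 0)
    (fun l => exists pr : Riemann_integrable f a b, RiemannInt pr = l).

Definition improper_int_open (f : R -> R) (a l : R) : Prop :=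
  forall eps, 0 < eps -> exists d M, 0 < d /\
    forall a' b, a < a' < a + d -> M < b ->
      exists pr : Riemann_integrable f a' b, Rabs (RiemannInt pr - l) < eps.

Definition IntOpen (f : R -> R) (a : R) : R :=
  epsilon (inhabits 0) (fun l => improper_int_open f a l).

Definition K0 (r : R) : R := IntOpen (fun u => exp (- r * cosh u)) 0.

Definition is_deriv_pos (f f' : R -> R) : Prop :=
  forall x, 0 < x -> derivable_pt_lim f x (f' x).

Definition deriv_pos (f : R -> R) : R -> R :=
  epsilon (inhabits (fun _ => 0)) (fun f' => is_deriv_pos f f').

Definition K0''' : R -> R := deriv_pos (deriv_pos (deriv_pos K0)).

Definition g (s : R) : R :=
  - s / (4 * PI) * IntOpen (fun r => K0''' r * r / sqrt (r ^ 2 - s ^ 2)) s.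

Definition Gam (beta s : R) : R := beta * PI / 4 * s ^ 2 * g s.
Definition Bf (beta s : R) : R := beta / 2 * g s.

Definition LambertW (x : R) : R :=
  epsilon (inhabits 0) (fun w => -1 <= w /\ w * exp w = x).

(* x |-> -W(-x)/x, with value 1 at x = 0 (its continuous extension). *)
Definition negWq (x : R) : R :=
  if Req_EM_T x 0 then 1 else - LambertW (- x) / x.

Definition tau (beta : R) (k : nat) (t0 t : R) : R :=
  RInt (fun s => Gam beta s * exp ((INR k + 1) / INR k * RInt (Bf beta) s t)) t0 t.

Definition cont_on_at (f : R -> R) (a b s : R) : Prop :=
  limit1_in f (fun x => a <= x <= b) (f s) s.

From Pilot Require Import Defs.
From Stdlib Require Import Reals Lra Lia Psatz ClassicalEpsilon.
From Coquelicot Require Import Coquelicot.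
Open Scope R_scope.

(* K_0(r) = int_0^oo exp(-r cosh u) du is the member m = 0 of the moments
      K_m(r) = int_0^oo cosh(u)^m exp(-r cosh u) du, and K_m' = -K_(m+1) (differentiation under
      the integral, via a second-order Taylor bound).  Hence K_0''' = -K_3, and the substitution
      r = sqrt(s^2 + w^2) gives g(s) = s/(4 pi) int_0^oo K_3(sqrt(s^2 + w^2)) dw.  Therefore g,
      Gamma and B are nonnegative and continuous on (0, +oo).
   2. With c = (k+1)/k and Bint(u) = int_t0^u B, tau_k(t0, u) = exp(c Bint u) int_t0^u Gamma
      exp(-c Bint) solves tau' = c B tau + Gamma, tau(t0) = 0.
   3. Let a_1 = 1, (n-1) a_n = n/2 sum_j a_j a_(n-j).  Integrating factors show by strong
      induction that 0 <= C_n <= a_n tau^(n-1) on [t0, t] (this uses c >= 1 and B, Gamma >= 0).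
   4. The partial sums S_N(x) = sum_(n<=N) a_(n+1) x^n satisfy S_N(x) <= exp(x S_(N-1)(x)), hence
      x S_N(x) <= T for every fixed point T = x e^T; with T = -W(-x) this is S_N(x) <= -W(-x)/x.
   5. The series for Theta at z has nonnegative terms dominated by a_(n+1) (tau z)^n, so it
      converges, below -W(-tau z)/(tau z). *)

Lemma Defs_RInt_eq (f : R -> R) a b :
  Riemann_integrable f a b -> Defs.RInt f a b = RInt f a b.
Proof.
  intros pr. unfold Defs.RInt.
  destruct (epsilon_spec (inhabits 0)
    (fun l => exists pr : Riemann_integrable f a b, RiemannInt pr = l)) as [pr' <-].
  - exists (RiemannInt pr); exists pr; reflexivity.
  - symmetry; apply RInt_Reals.
Qed.

Lemma ex_RInt_above (f : R -> R) lo a b :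
  (forall x, lo <= x -> continuous f x) -> lo <= a -> lo <= b -> ex_RInt f a b.
Proof.
  intros Hc Ha Hb. apply (ex_RInt_continuous (V:=R_CompleteNormedModule)).
  intros z [Hz _]. apply Hc. apply Rle_trans with (2 := Hz).
  unfold Rmin; destruct Rle_dec; lra.
Qed.

Lemma ex_RInt_pos (f : R -> R) a b :
  (forall x, 0 < x -> continuous f x) -> 0 < a -> 0 < b -> ex_RInt f a b.
Proof.
  intros Hc Ha Hb. apply (ex_RInt_above f (Rmin a b)); [| apply Rmin_l | apply Rmin_r].
  intros x Hx; apply Hc. pose proof (Rmin_glb_lt a b 0 Ha Hb). lra.
Qed.

Lemma RInt_Chasles_R (f : R -> R) a b c : ex_RInt f a b -> ex_RInt f b c ->
  RInt f a c = RInt f a b + RInt f b c.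
Proof. intros H1 H2. exact (eq_sym (RInt_Chasles (V:=R_CompleteNormedModule) f a b c H1 H2)). Qed.

Lemma RInt_scal_R (f : R -> R) a b l : ex_RInt f a b ->
  RInt (fun x => l * f x) a b = l * RInt f a b.
Proof. exact (RInt_scal (V:=R_CompleteNormedModule) f a b l). Qed.

Lemma RInt_le_const (f : R -> R) a b M : a <= b -> ex_RInt f a b ->
  (forall x, a <= x <= b -> f x <= M) -> RInt f a b <= (b - a) * M.
Proof.
  intros Hab Hf HM. apply Rle_trans with (RInt (fun _ => M) a b).
  - apply RInt_le; auto. apply ex_RInt_const. intros x Hx; apply HM; lra.
  - rewrite RInt_const. right; reflexivity.
Qed.

Lemma exp_le x y : x <= y -> exp x <= exp y.
Proof. intros [H | ->]; [left; apply exp_increasing; auto | lra]. Qed.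

Lemma nondecreasing_of_deriv_nonneg (f f' : R -> R) a b : a < b ->
  (forall x, a <= x <= b -> continuity_pt f x) ->
  (forall x, a < x < b -> derivable_pt_lim f x (f' x)) ->
  (forall x, a < x < b -> 0 <= f' x) -> f a <= f b.
Proof.
  intros Hab Hc Hd Hp.
  assert (pr1 : forall c, a < c < b -> derivable_pt f c) by (intros c Hc'; exists (f' c); apply Hd; auto).
  assert (pr2 : forall c, a < c < b -> derivable_pt id c) by (intros; apply derivable_pt_id).
  destruct (MVT f id a b pr1 pr2 Hab Hc) as [c [P Heq]].
  { intros; apply derivable_continuous_pt, derivable_pt_id. }
  rewrite (derive_pt_eq_0 f c (f' c) (pr1 c P) (Hd c P)) in Heq.
  rewrite (derive_pt_eq_0 id c 1 (pr2 c P) (derivable_pt_lim_id c)) in Heq.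
  unfold id in Heq. pose proof (Hp c P). nra.
Qed.

Lemma derivable_pt_lim_exp_comp (f : R -> R) x l :
  derivable_pt_lim f x l -> derivable_pt_lim (fun y => exp (f y)) x (l * exp (f x)).
Proof.
  intros H. rewrite Rmult_comm.
  exact (derivable_pt_lim_comp f exp x l (exp (f x)) H (derivable_pt_lim_exp (f x))).
Qed.

Lemma locally_between a b x : a < x < b -> locally x (fun y => a < y < b).
Proof.
  intros H. assert (Hp : 0 < Rmin (x - a) (b - x)) by (apply Rmin_pos; lra).
  exists (mkposreal _ Hp). intros y Hy.
  unfold ball in Hy; simpl in Hy. unfold AbsRing_ball, abs, minus, plus, opp in Hy; simpl in Hy.
  apply Rabs_def2 in Hy.
  pose proof (Rmin_l (x - a) (b - x)). pose proof (Rmin_r (x - a) (b - x)). simpl in *. lra.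
Qed.

Lemma locally_above a x : a < x -> locally x (fun y => a < y).
Proof.
  intros H. generalize (locally_between a (x + 1) x ltac:(lra)).
  apply filter_imp. intros y Hy; lra.
Qed.

Lemma RInt_derivable_pos (f : R -> R) a u :
  (forall x, 0 < x -> continuous f x) -> 0 < a -> 0 < u ->
  derivable_pt_lim (fun v => RInt f a v) u (f u).
Proof.
  intros Hc Ha Hu. apply is_derive_Reals.
  apply (is_derive_RInt (V:=R_CompleteNormedModule) f (fun v => RInt f a v) a u).
  - generalize (locally_above 0 u Hu). apply filter_imp. intros y Hy.
    apply (RInt_correct (V:=R_CompleteNormedModule)), ex_RInt_pos; auto.
  - apply Hc; auto.
Qed.

(** * Improper integrals over [0, +oo) of nonnegative functions *)

(* [half_line_int f] is the limit of the integrals over [0, n]; for a nonnegative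
   continuous [f] with bounded partial integrals it is the improper integral. *)
Definition half_line_int (f : R -> R) : R := Lim_seq (fun n => RInt f 0 (INR n)).

Section HalfLine.
Variables (f : R -> R) (K : R).
Hypothesis f_cont : forall x, 0 <= x -> continuous f x.
Hypothesis f_nonneg : forall x, 0 <= x -> 0 <= f x.
Hypothesis f_bounded : forall b, 0 <= b -> RInt f 0 b <= K.

Let f_int a b : 0 <= a -> 0 <= b -> ex_RInt f a b.
Proof. apply ex_RInt_above; auto. Qed.

Lemma RInt_half_line_mono b b' : 0 <= b -> b <= b' -> RInt f 0 b <= RInt f 0 b'.
Proof.
  intros Hb Hbb. rewrite (RInt_Chasles_R f 0 b b') by (apply f_int; lra).
  assert (0 <= RInt f b b') by (apply RInt_ge_0; auto; [apply f_int; lra | intros; apply f_nonneg; lra]).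
  lra.
Qed.

Lemma half_line_int_lim : is_lim_seq (fun n => RInt f 0 (INR n)) (half_line_int f).
Proof.
  assert (Hinc : forall n, RInt f 0 (INR n) <= RInt f 0 (INR (S n))).
  { intros n. apply RInt_half_line_mono. apply pos_INR. rewrite S_INR; lra. }
  pose proof (Lim_seq_correct _ (ex_lim_seq_incr _ Hinc)) as H. unfold half_line_int.
  assert (Hup : Rbar_le (Lim_seq (fun n => RInt f 0 (INR n))) K).
  { apply is_lim_seq_le with (2 := H) (3 := is_lim_seq_const K). intros n; apply f_bounded, pos_INR. }
  assert (Hlo : Rbar_le (RInt f 0 0) (Lim_seq (fun n => RInt f 0 (INR n)))).
  { apply is_lim_seq_le with (2 := is_lim_seq_const _) (3 := H). intros n.
    apply RInt_half_line_mono; [lra | apply pos_INR]. }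
  destruct (Lim_seq (fun n => RInt f 0 (INR n))); simpl in *; tauto.
Qed.

Lemma RInt_le_half_line_int b : 0 <= b -> RInt f 0 b <= half_line_int f.
Proof.
  intros Hb.
  assert (H : Rbar_le (RInt f 0 b) (half_line_int f)).
  { apply is_lim_seq_le_loc with (2 := is_lim_seq_const _) (3 := half_line_int_lim).
    destruct (nfloor_ex b Hb) as [N HN]. exists (S N). intros n Hn.
    apply RInt_half_line_mono; auto. apply le_INR in Hn. rewrite S_INR in Hn. lra. }
  exact H.
Qed.

Lemma half_line_int_nonneg : 0 <= half_line_int f.
Proof.
  apply Rle_trans with (RInt f 0 0); [rewrite RInt_point; right; reflexivity |].
  apply RInt_le_half_line_int; lra.
Qed.

Lemma half_line_int_le_bound : half_line_int f <= K.
Proof.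
  assert (H : Rbar_le (half_line_int f) K).
  { apply is_lim_seq_le with (2 := half_line_int_lim) (3 := is_lim_seq_const _).
    intros; apply f_bounded, pos_INR. }
  exact H.
Qed.

Lemma half_line_int_tail eps : 0 < eps ->
  exists M, 0 <= M /\ forall b, M <= b -> half_line_int f - eps < RInt f 0 b.
Proof.
  intros He. pose proof half_line_int_lim as H. apply is_lim_seq_Reals in H.
  destruct (H eps He) as [N HN]. exists (INR N). split; [apply pos_INR |]. intros b Hb.
  specialize (HN N (Nat.le_refl _)). unfold Rdist in HN. apply Rabs_def2 in HN.
  pose proof (RInt_half_line_mono (INR N) b (pos_INR _) Hb). lra.
Qed.

End HalfLine.

Lemma improper_int_open_unique f a l1 l2 :
  improper_int_open f a l1 -> improper_int_open f a l2 -> l1 = l2.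
Proof.
  intros H1 H2. destruct (Req_dec l1 l2) as [E|E]; auto. exfalso.
  assert (He : 0 < Rabs (l1 - l2) / 2) by (apply Rdiv_lt_0_compat; [apply Rabs_pos_lt; lra | lra]).
  destruct (H1 _ He) as [d1 [M1 [Hd1 HH1]]]. destruct (H2 _ He) as [d2 [M2 [Hd2 HH2]]].
  pose proof (Rmin_l d1 d2). pose proof (Rmin_r d1 d2). pose proof (Rmin_pos d1 d2 Hd1 Hd2).
  pose proof (Rmax_l M1 M2). pose proof (Rmax_r M1 M2).
  destruct (HH1 (a + Rmin d1 d2 / 2) (Rmax M1 M2 + 1)) as [pr1 Hp1]; try lra.
  destruct (HH2 (a + Rmin d1 d2 / 2) (Rmax M1 M2 + 1)) as [pr2 Hp2]; try lra.
  rewrite (RiemannInt_P5 pr1 pr2) in Hp1.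
  assert (Htri : Rabs (l1 - l2) <= Rabs (RiemannInt pr2 - l1) + Rabs (RiemannInt pr2 - l2)).
  { replace (l1 - l2) with (- (RiemannInt pr2 - l1) + (RiemannInt pr2 - l2)) by ring.
    rewrite <- (Rabs_Ropp (RiemannInt pr2 - l1)). apply Rabs_triang. }
  lra.
Qed.

Lemma IntOpen_eq f a l : improper_int_open f a l -> IntOpen f a = l.
Proof.
  intros H. unfold IntOpen. eapply improper_int_open_unique; [| exact H].
  exact (epsilon_spec (inhabits 0) (fun l => improper_int_open f a l) (ex_intro _ l H)).
Qed.

(** * The moments K_m(r) = int_0^oo cosh(u)^m exp(-r cosh u) du *)

Lemma cosh_nonneg u : 0 <= cosh u.
Proof. unfold cosh. pose proof (exp_pos u). pose proof (exp_pos (-u)). lra. Qed.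

Lemma cosh_ge_id u : 0 <= u -> u <= cosh u.
Proof.
  intros Hu. unfold cosh. pose proof (exp_ge_taylor u 2 Hu) as H.
  simpl in H. unfold Factorial.fact in H. simpl in H. pose proof (exp_pos (-u)). nra.
Qed.

(* y^m <= m! e^y: one term of the exponential series. *)
Lemma pow_le_fact_exp y m : 0 <= y -> y ^ m <= INR (Factorial.fact m) * exp y.
Proof.
  intros Hy. pose proof (exp_ge_taylor y m Hy) as H.
  assert (Hf : 0 < INR (Factorial.fact m)) by (apply lt_0_INR, Factorial.lt_O_fact).
  assert (Hterm : y ^ m / INR (Factorial.fact m) <= exp y).
  { apply Rle_trans with (2 := H). destruct m as [|m].
    - simpl. lra.
    - rewrite tech5. assert (0 <= sum_f_R0 (fun k => y ^ k / INR (Factorial.fact k)) m).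
      { apply cond_pos_sum. intros n. apply Rmult_le_pos; [apply pow_le; auto |].
        apply Rlt_le, Rinv_0_lt_compat, lt_0_INR, Factorial.lt_O_fact. }
      lra. }
  apply Rmult_le_reg_r with (/ INR (Factorial.fact m)); [apply Rinv_0_lt_compat; lra |].
  replace (INR (Factorial.fact m) * exp y * / INR (Factorial.fact m)) with (exp y) by (field; lra).
  exact Hterm.
Qed.

Definition moment_integrand (m : nat) (r u : R) : R := cosh u ^ m * exp (- r * cosh u).
Definition Kmom (m : nat) (r : R) : R := half_line_int (moment_integrand m r).

Lemma moment_integrand_cont m r u : continuous (moment_integrand m r) u.
Proof.
  apply (ex_derive_continuous (V:=R_NormedModule)). unfold moment_integrand, cosh. auto_derive. auto.
Qed.

Lemma moment_integrand_nonneg m r u : 0 <= moment_integrand m r u.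
Proof. apply Rmult_le_pos; [apply pow_le, cosh_nonneg | apply Rlt_le, exp_pos]. Qed.

Lemma moment_integrand_antitone m r r' u : r <= r' -> moment_integrand m r' u <= moment_integrand m r u.
Proof.
  intros H. apply Rmult_le_compat_l; [apply pow_le, cosh_nonneg |].
  apply exp_le. pose proof (cosh_nonneg u). nra.
Qed.

Lemma moment_integrand_ex_RInt m r a b : 0 <= a -> 0 <= b -> ex_RInt (moment_integrand m r) a b.
Proof. apply ex_RInt_above. intros; apply moment_integrand_cont. Qed.

(* Exponential decay of the integrand: writing y = r cosh(u)/2, y^m e^{-y} <= m!. *)
Lemma moment_integrand_decay m r u : 0 < r -> 0 <= u ->
  moment_integrand m r u <= INR (Factorial.fact m) * (2 / r) ^ m * exp (- (r / 2) * u).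
Proof.
  intros Hr Hu. unfold moment_integrand. pose proof (cosh_ge_id u Hu) as Hcu.
  set (c := cosh u) in *. set (y := r * c / 2).
  assert (Hy : 0 <= y) by (unfold y; nra).
  assert (Hc : c = 2 / r * y) by (unfold y; field; lra).
  assert (Hexp : exp (- r * c) = exp (- y) * exp (- y)).
  { rewrite <- exp_plus. f_equal. unfold y. field. }
  assert (Hyu : exp (- y) <= exp (- (r / 2) * u)) by (apply exp_le; unfold y; nra).
  assert (Hyexp : y ^ m * exp (- y) <= INR (Factorial.fact m)).
  { pose proof (pow_le_fact_exp y m Hy). pose proof (exp_pos (- y)).
    assert (Hee : exp y * exp (- y) = 1) by (rewrite <- exp_plus, Rplus_opp_r, exp_0; reflexivity).
    rewrite <- (Rmult_1_r (INR _)), <- Hee, <- Rmult_assoc.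
    apply Rmult_le_compat_r; lra. }
  rewrite Hexp, Hc, Rpow_mult_distr.
  assert (Hpr : 0 <= (2 / r) ^ m) by (apply pow_le; apply Rlt_le, Rdiv_lt_0_compat; lra).
  pose proof (exp_pos (- y)). pose proof (pow_le y m Hy).
  replace ((2 / r) ^ m * y ^ m * (exp (- y) * exp (- y)))
    with ((2 / r) ^ m * (y ^ m * exp (- y)) * exp (- y)) by ring.
  apply Rmult_le_compat; try nra.
  apply Rmult_le_pos; nra.
Qed.

Lemma RInt_exp_decay r b : 0 < r -> 0 <= b -> RInt (fun u => exp (- (r / 2) * u)) 0 b <= 2 / r.
Proof.
  intros Hr Hb.
  pose (F := fun u => - (2 / r) * exp (- (r / 2) * u)).
  assert (His : is_RInt (fun u => exp (- (r / 2) * u)) 0 b (minus (F b) (F 0))).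
  { apply (is_RInt_derive (V:=R_CompleteNormedModule) F).
    - intros x _. unfold F. auto_derive; auto. field. lra.
    - intros x _. apply (ex_derive_continuous (V:=R_NormedModule)). auto_derive. auto. }
  rewrite (is_RInt_unique _ _ _ _ His). unfold minus, plus, opp, F; simpl.
  rewrite Rmult_0_r, exp_0. pose proof (exp_pos (- (r / 2) * b)).
  assert (0 < 2 / r) by (apply Rdiv_lt_0_compat; lra). nra.
Qed.

Definition Kmom_bound (m : nat) (r : R) : R := INR (Factorial.fact m) * (2 / r) ^ m * (2 / r).

Lemma RInt_moment_integrand_bound m r b : 0 < r -> 0 <= b ->
  RInt (moment_integrand m r) 0 b <= Kmom_bound m r.
Proof.
  intros Hr Hb. unfold Kmom_bound.
  set (A := INR (Factorial.fact m) * (2 / r) ^ m).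
  assert (HA : 0 <= A) by (apply Rmult_le_pos; [apply pos_INR | apply pow_le; apply Rlt_le, Rdiv_lt_0_compat; lra]).
  assert (Hex : ex_RInt (fun u => exp (- (r / 2) * u)) 0 b).
  { apply (ex_RInt_continuous (V:=R_CompleteNormedModule)). intros z _.
    apply (ex_derive_continuous (V:=R_NormedModule)). auto_derive. auto. }
  apply Rle_trans with (RInt (fun u => A * exp (- (r / 2) * u)) 0 b).
  - apply RInt_le; auto.
    + apply moment_integrand_ex_RInt; lra.
    + apply (ex_RInt_scal (V:=R_CompleteNormedModule)); auto.
    + intros x Hx. apply moment_integrand_decay; lra.
  - rewrite RInt_scal_R by auto. apply Rmult_le_compat_l; auto. apply RInt_exp_decay; auto.
Qed.

Section KmomFacts.
Variables (m : nat) (r : R).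
Hypothesis r_pos : 0 < r.

Let cont x (_ : 0 <= x) := moment_integrand_cont m r x.
Let nonneg x (_ : 0 <= x) := moment_integrand_nonneg m r x.
Let bnd b (Hb : 0 <= b) := RInt_moment_integrand_bound m r b r_pos Hb.

Lemma Kmom_lim : is_lim_seq (fun n => RInt (moment_integrand m r) 0 (INR n)) (Kmom m r).
Proof. exact (half_line_int_lim _ _ cont nonneg bnd). Qed.

Lemma RInt_le_Kmom b : 0 <= b -> RInt (moment_integrand m r) 0 b <= Kmom m r.
Proof. exact (RInt_le_half_line_int _ _ cont nonneg bnd b). Qed.

Lemma Kmom_nonneg : 0 <= Kmom m r.
Proof. exact (half_line_int_nonneg _ _ cont nonneg bnd). Qed.

Lemma Kmom_le_bound : Kmom m r <= Kmom_bound m r.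
Proof. exact (half_line_int_le_bound _ _ cont nonneg bnd). Qed.

Lemma Kmom_tail eps : 0 < eps ->
  exists M, 0 <= M /\ forall b, M <= b -> Kmom m r - eps < RInt (moment_integrand m r) 0 b.
Proof. exact (half_line_int_tail _ _ cont nonneg bnd eps). Qed.

End KmomFacts.

Lemma Kmom_antitone m r r' : 0 < r -> r <= r' -> Kmom m r' <= Kmom m r.
Proof.
  intros Hr Hrr.
  assert (H : Rbar_le (Kmom m r') (Kmom m r)).
  { apply is_lim_seq_le with (2 := Kmom_lim m r' ltac:(lra)) (3 := Kmom_lim m r Hr). intros n.
    apply RInt_le; try apply moment_integrand_ex_RInt; try apply pos_INR; try lra.
    intros; apply moment_integrand_antitone; auto. }
  exact H.
Qed.

Lemma Kmom3_bound r : 0 < r -> Kmom 3 r <= 96 / r ^ 4.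
Proof.
  intros Hr. eapply Rle_trans; [apply Kmom_le_bound; auto |].
  unfold Kmom_bound. simpl. unfold Factorial.fact; simpl. right. field. lra.
Qed.

(** * Differentiation of the moments: K_m' = - K_(m+1) *)

Lemma cont_of_ex_derive (f : R -> R) x : ex_derive f x -> continuity_pt f x.
Proof.
  intros H. apply continuity_pt_filterlim.
  exact (ex_derive_continuous (V:=R_NormedModule) f x H).
Qed.

Lemma exp_taylor2_abs y : Rabs (exp y - 1 - y) <= y ^ 2 * exp (Rabs y).
Proof.
  assert (Hmvt : forall y, exists c, Rabs c <= Rabs y /\ exp y - 1 = exp c * y).
  { intros y'. destruct (MVT_gen exp 0 y' exp) as [c [Hc Heq]].
    - intros x _. apply is_derive_Reals, derivable_pt_lim_exp.
    - intros x _. apply derivable_continuous_pt, derivable_pt_exp.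
    - exists c. rewrite exp_0 in Heq. split; [| lra].
      unfold Rmin, Rmax in Hc. destruct Rle_dec; unfold Rabs; repeat destruct Rcase_abs; lra. }
  destruct (MVT_gen (fun z => exp z - 1 - z) 0 y (fun z => exp z - 1)) as [c [Hc Heq]].
  - intros x _. auto_derive; auto. ring.
  - intros x _. apply cont_of_ex_derive. auto_derive. auto.
  - rewrite exp_0 in Heq. replace (exp y - 1 - y) with (exp y - 1 - y - (1 - 1 - 0)) by ring.
    rewrite Heq. destruct (Hmvt c) as [d [Hd ->]].
    assert (Hcy : Rabs c <= Rabs y).
    { unfold Rmin, Rmax in Hc. destruct Rle_dec; unfold Rabs; repeat destruct Rcase_abs; lra. }
    assert (exp d <= exp (Rabs y)) by (apply exp_le; pose proof (RRle_abs d); lra).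
    rewrite Rminus_0_r, !Rabs_mult, (Rabs_pos_eq (exp d)) by (apply Rlt_le, exp_pos).
    rewrite <- Rsqr_pow2, Rsqr_abs. unfold Rsqr.
    pose proof (Rabs_pos c). pose proof (Rabs_pos y). pose proof (exp_pos d).
    apply Rle_trans with (exp (Rabs y) * Rabs y * Rabs y); [apply Rmult_le_compat; nra | lra].
Qed.

Lemma moment_integrand_taylor m r h u :
  Rabs (moment_integrand m (r + h) u - moment_integrand m r u + h * moment_integrand (S m) r u)
  <= h ^ 2 * moment_integrand (S (S m)) (r - Rabs h) u.
Proof.
  unfold moment_integrand. set (c := cosh u). assert (Hc : 0 <= c) by apply cosh_nonneg.
  replace (c ^ m * exp (- (r + h) * c) - c ^ m * exp (- r * c) + h * (c ^ S m * exp (- r * c)))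
    with (c ^ m * exp (- r * c) * (exp (- h * c) - 1 - (- h * c)))
    by (replace (- (r + h) * c) with (- r * c + - h * c) by ring; rewrite exp_plus; simpl; ring).
  assert (Hpos : 0 <= c ^ m * exp (- r * c)) by (apply Rmult_le_pos; [apply pow_le; auto | apply Rlt_le, exp_pos]).
  rewrite Rabs_mult, (Rabs_pos_eq _ Hpos).
  eapply Rle_trans; [apply Rmult_le_compat_l; [exact Hpos | apply exp_taylor2_abs] |].
  right. rewrite Rabs_mult, Rabs_Ropp, (Rabs_pos_eq c Hc).
  replace (- (r - Rabs h) * c) with (- r * c + Rabs h * c) by ring. rewrite exp_plus. simpl. ring.
Qed.

Lemma RInt_abs_le_dominated (f g : R -> R) a b : a <= b -> ex_RInt f a b -> ex_RInt g a b ->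
  (forall x, a <= x <= b -> Rabs (f x) <= g x) -> Rabs (RInt f a b) <= RInt g a b.
Proof.
  intros Hab Hf Hg Hfg. apply Rabs_le. split.
  - rewrite <- (Ropp_involutive (RInt f a b)). apply Ropp_le_contravar.
    rewrite <- (RInt_opp (V:=R_CompleteNormedModule)) by auto.
    apply RInt_le; auto. apply (ex_RInt_opp (V:=R_CompleteNormedModule)); auto.
    intros x Hx. pose proof (Hfg x ltac:(lra)) as H. apply Rabs_le_between in H. unfold opp; simpl; lra.
  - apply RInt_le; auto. intros x Hx. pose proof (Hfg x ltac:(lra)) as H. apply Rabs_le_between in H. lra.
Qed.

Lemma is_lim_seq_abs_le (u : nat -> R) (l B : R) :
  is_lim_seq u l -> (forall n, Rabs (u n) <= B) -> Rabs l <= B.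
Proof.
  intros Hl HB. apply Rabs_le. split.
  - apply (is_lim_seq_le (fun _ => - B) u (- B) l); [| apply is_lim_seq_const | exact Hl].
    intros n. pose proof (HB n) as H. apply Rabs_le_between in H. lra.
  - apply (is_lim_seq_le u (fun _ => B) l B); [| exact Hl | apply is_lim_seq_const].
    intros n. pose proof (HB n) as H. apply Rabs_le_between in H. lra.
Qed.

Lemma Kmom_taylor m r h : 0 < r -> Rabs h < r / 2 ->
  Rabs (Kmom m (r + h) - Kmom m r + h * Kmom (S m) r) <= h ^ 2 * Kmom (S (S m)) (r / 2).
Proof.
  intros Hr Hh.
  assert (Hrh : 0 < r + h) by (apply Rabs_def2 in Hh; lra).
  set (D := fun x => moment_integrand m (r + h) x - moment_integrand m r x + h * moment_integrand (S m) r x).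
  assert (Hint : forall m' r' b, 0 <= b -> ex_RInt (moment_integrand m' r') 0 b)
    by (intros; apply moment_integrand_ex_RInt; lra).
  assert (HDint : forall b, 0 <= b -> ex_RInt D 0 b).
  { intros b Hb. apply (ex_RInt_plus (V:=R_CompleteNormedModule));
      [apply (ex_RInt_minus (V:=R_CompleteNormedModule)) | apply (ex_RInt_scal (V:=R_CompleteNormedModule))];
      auto. }
  assert (HD : forall b, 0 <= b -> RInt D 0 b
      = RInt (moment_integrand m (r + h)) 0 b - RInt (moment_integrand m r) 0 b
        + h * RInt (moment_integrand (S m) r) 0 b).
  { intros b Hb. unfold D.
    rewrite (RInt_plus (V:=R_CompleteNormedModule)).
    - rewrite (RInt_minus (V:=R_CompleteNormedModule)) by auto. rewrite RInt_scal_R by auto. reflexivity.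
    - apply (ex_RInt_minus (V:=R_CompleteNormedModule)); auto.
    - apply (ex_RInt_scal (V:=R_CompleteNormedModule)); auto. }
  apply (is_lim_seq_abs_le (fun n => RInt D 0 (INR n))).
  - apply (is_lim_seq_ext (fun n => RInt (moment_integrand m (r + h)) 0 (INR n)
        - RInt (moment_integrand m r) 0 (INR n) + h * RInt (moment_integrand (S m) r) 0 (INR n))).
    { intros n. symmetry. apply HD, pos_INR. }
    apply is_lim_seq_plus'; [apply is_lim_seq_minus'; apply Kmom_lim; auto |].
    apply (is_lim_seq_scal_l _ h (Kmom (S m) r)), Kmom_lim; auto.
  - intros n. pose proof (pos_INR n) as Hn.
    eapply Rle_trans.
    + apply (RInt_abs_le_dominated D (fun x => h ^ 2 * moment_integrand (S (S m)) (r - Rabs h) x));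
        [exact Hn | apply HDint, Hn | apply (ex_RInt_scal (V:=R_CompleteNormedModule)), Hint, Hn |].
      intros x _. apply moment_integrand_taylor.
    + rewrite RInt_scal_R by (apply moment_integrand_ex_RInt; lra).
      apply Rmult_le_compat_l; [apply pow2_ge_0 |].
      apply Rle_trans with (Kmom (S (S m)) (r - Rabs h)); [apply RInt_le_Kmom; lra |].
      apply Kmom_antitone; lra.
Qed.

Lemma Kmom_derivable m r : 0 < r -> derivable_pt_lim (Kmom m) r (- Kmom (S m) r).
Proof.
  intros Hr eps He.
  set (B := Kmom (S (S m)) (r / 2)).
  assert (HB : 0 <= B) by (apply Kmom_nonneg; lra).
  assert (Hd : 0 < Rmin (r / 2) (eps / (B + 1))) by (apply Rmin_pos; [lra | apply Rdiv_lt_0_compat; lra]).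
  pose proof (Rmin_l (r / 2) (eps / (B + 1))) as Hm1. pose proof (Rmin_r (r / 2) (eps / (B + 1))) as Hm2.
  exists (mkposreal _ Hd). intros h Hh0 Hh. simpl in Hh.
  pose proof (Kmom_taylor m r h Hr ltac:(lra)) as Ht. fold B in Ht.
  replace ((Kmom m (r + h) - Kmom m r) / h - - Kmom (S m) r)
    with ((Kmom m (r + h) - Kmom m r + h * Kmom (S m) r) / h) by (field; exact Hh0).
  assert (Hah : 0 < Rabs h) by (apply Rabs_pos_lt; exact Hh0).
  unfold Rdiv. rewrite Rabs_mult, Rabs_inv.
  apply Rmult_le_compat_r with (r := / Rabs h) in Ht; [| left; apply Rinv_0_lt_compat; auto].
  rewrite <- Rsqr_pow2, Rsqr_abs in Ht. unfold Rsqr in Ht.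
  replace (Rabs h * Rabs h * B * / Rabs h) with (Rabs h * B) in Ht by (field; lra).
  apply Rle_lt_trans with (1 := Ht).
  apply Rle_lt_trans with (eps / (B + 1) * B); [apply Rmult_le_compat_r; lra |].
  apply Rlt_le_trans with (eps / (B + 1) * (B + 1)); [apply Rmult_lt_compat_l; [apply Rdiv_lt_0_compat |]; lra |].
  right; field; lra.
Qed.

Lemma Kmom_continuous m r : 0 < r -> continuity_pt (Kmom m) r.
Proof. intros Hr. apply derivable_continuous_pt. eexists. apply Kmom_derivable; auto. Qed.

Lemma K0_eq r : 0 < r -> K0 r = Kmom 0 r.
Proof.
  intros Hr. unfold K0. apply IntOpen_eq. intros eps He.
  destruct (Kmom_tail 0 r Hr (eps / 2) ltac:(lra)) as [M0 [HM0 HT]].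
  exists (Rmin 1 (eps / 2)), (M0 + 1). split; [apply Rmin_pos; lra |].
  intros a' b Ha' Hb. pose proof (Rmin_l 1 (eps / 2)). pose proof (Rmin_r 1 (eps / 2)).
  assert (Hext : forall x, moment_integrand 0 r x = exp (- r * cosh x))
    by (intros; unfold moment_integrand; simpl; ring).
  assert (Hex : ex_RInt (fun u => exp (- r * cosh u)) a' b).
  { apply (ex_RInt_ext (moment_integrand 0 r)); [intros; apply Hext |].
    apply moment_integrand_ex_RInt; lra. }
  exists (ex_RInt_Reals_0 _ _ _ Hex).
  rewrite <- RInt_Reals, <- (RInt_ext (moment_integrand 0 r)) by (intros; apply Hext).
  (* the integral over [0, a'] is at most a', since the integrand is at most 1 *)
  assert (Hsmall : RInt (moment_integrand 0 r) 0 a' <= a').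
  { replace a' with ((a' - 0) * 1) at 2 by ring.
    apply RInt_le_const; [lra | apply moment_integrand_ex_RInt; lra |].
    intros x _. rewrite Hext, <- exp_0. apply exp_le. pose proof (cosh_nonneg x). nra. }
  assert (0 <= RInt (moment_integrand 0 r) 0 a')
    by (apply RInt_ge_0; [lra | apply moment_integrand_ex_RInt; lra | intros; apply moment_integrand_nonneg]).
  pose proof (RInt_Chasles_R (moment_integrand 0 r) 0 a' b
    ltac:(apply moment_integrand_ex_RInt; lra) ltac:(apply moment_integrand_ex_RInt; lra)).
  pose proof (HT b ltac:(lra)). pose proof (RInt_le_Kmom 0 r Hr b ltac:(lra)).
  apply Rabs_def1; lra.
Qed.

Lemma deriv_pos_eq f f' : is_deriv_pos f f' -> forall x, 0 < x -> deriv_pos f x = f' x.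
Proof.
  intros H x Hx. unfold deriv_pos.
  pose proof (epsilon_spec (inhabits (fun _ => 0)) (fun f' => is_deriv_pos f f') (ex_intro _ f' H)) as H'.
  eapply uniqueness_limite; [apply H'; auto | apply H; auto].
Qed.

Lemma derivable_pt_lim_pos_ext f g x l : 0 < x -> (forall y, 0 < y -> f y = g y) ->
  derivable_pt_lim f x l -> derivable_pt_lim g x l.
Proof.
  intros Hx Hfg H. apply is_derive_Reals. apply is_derive_Reals in H.
  apply (is_derive_ext_loc f g); auto.
  generalize (locally_above 0 x Hx). apply filter_imp. auto.
Qed.

Lemma K0'''_eq r : 0 < r -> K0''' r = - Kmom 3 r.
Proof.
  intros Hr.
  assert (D1 : is_deriv_pos K0 (fun x => - Kmom 1 x)).
  { intros x Hx. apply derivable_pt_lim_pos_ext with (Kmom 0); auto.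
    - intros; symmetry; apply K0_eq; auto.
    - apply Kmom_derivable; auto. }
  assert (D2 : is_deriv_pos (deriv_pos K0) (fun x => Kmom 2 x)).
  { intros x Hx. apply derivable_pt_lim_pos_ext with (fun x => - Kmom 1 x); auto.
    - intros; symmetry; apply (deriv_pos_eq _ _ D1); auto.
    - rewrite <- (Ropp_involutive (Kmom 2 x)). apply derivable_pt_lim_opp, Kmom_derivable; auto. }
  assert (D3 : is_deriv_pos (deriv_pos (deriv_pos K0)) (fun x => - Kmom 3 x)).
  { intros x Hx. apply derivable_pt_lim_pos_ext with (Kmom 2); auto.
    - intros; symmetry; apply (deriv_pos_eq _ _ D2); auto.
    - apply Kmom_derivable; auto. }
  unfold K0'''. apply (deriv_pos_eq _ _ D3); auto.
Qed.

(** * The representation g(s) = s/(4 pi) * int_0^oo K_3(sqrt(s^2 + w^2)) dw *)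

Lemma sqrt_sum_sq_ge a b : 0 <= a -> a <= sqrt (a ^ 2 + b ^ 2).
Proof. intros Ha. rewrite <- (sqrt_pow2 a) at 1 by lra. apply sqrt_le_1_alt. nra. Qed.

Definition g_integrand (s w : R) : R := Kmom 3 (sqrt (s ^ 2 + w ^ 2)).
Definition Jg (s : R) : R := half_line_int (g_integrand s).

Section GIntegrand.
Variable s : R.
Hypothesis s_pos : 0 < s.

Let radius_ge w : s <= sqrt (s ^ 2 + w ^ 2) := sqrt_sum_sq_ge s w (Rlt_le _ _ s_pos).

Lemma g_integrand_cont w : continuous (g_integrand s) w.
Proof.
  unfold g_integrand. apply (continuous_comp (fun w => sqrt (s ^ 2 + w ^ 2)) (Kmom 3)).
  - apply (ex_derive_continuous (V:=R_NormedModule)). auto_derive. nra.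
  - apply continuity_pt_filterlim, Kmom_continuous. pose proof (radius_ge w). lra.
Qed.

Lemma g_integrand_nonneg w : 0 <= g_integrand s w.
Proof. apply Kmom_nonneg. pose proof (radius_ge w). lra. Qed.

Lemma g_integrand_le w : g_integrand s w <= Kmom 3 s.
Proof. apply Kmom_antitone; auto. Qed.

Lemma g_integrand_ex_RInt a b : ex_RInt (g_integrand s) a b.
Proof. apply (ex_RInt_continuous (V:=R_CompleteNormedModule)). intros; apply g_integrand_cont. Qed.

(* Decay in w, from K_3(r) <= 96 / r^4. *)
Lemma g_integrand_decay w : 0 < w -> g_integrand s w <= 96 / w ^ 4.
Proof.
  intros Hw. unfold g_integrand. eapply Rle_trans; [apply Kmom3_bound; pose proof (radius_ge w); lra |].
  assert (Hq : w <= sqrt (s ^ 2 + w ^ 2)) by (rewrite Rplus_comm; apply sqrt_sum_sq_ge; lra).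
  unfold Rdiv. apply Rmult_le_compat_l; [lra |].
  apply Rinv_le_contravar; [apply pow_lt; lra | apply pow_incr; lra].
Qed.

Lemma RInt_g_integrand_tail W b : 1 <= W -> W <= b -> RInt (g_integrand s) W b <= 32 / W ^ 3.
Proof.
  intros HW Hb.
  pose (F := fun w => - (32 / w ^ 3)).
  assert (Hderiv : forall x, 1 <= x -> is_derive F x (96 / x ^ 4)).
  { intros x Hx. unfold F. auto_derive.
    - apply Rgt_not_eq. repeat apply Rmult_lt_0_compat; lra.
    - field. lra. }
  assert (His : is_RInt (fun w => 96 / w ^ 4) W b (minus (F b) (F W))).
  { apply (is_RInt_derive (V:=R_CompleteNormedModule) F);
      intros x Hx; rewrite Rmin_left, Rmax_right in Hx by lra.
    - apply Hderiv; lra.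
    - apply (ex_derive_continuous (V:=R_NormedModule)). auto_derive.
      apply Rgt_not_eq. repeat apply Rmult_lt_0_compat; lra. }
  apply Rle_trans with (RInt (fun w => 96 / w ^ 4) W b).
  - apply RInt_le; auto; [apply g_integrand_ex_RInt | eexists; exact His |].
    intros x Hx. apply g_integrand_decay; lra.
  - rewrite (is_RInt_unique _ _ _ _ His). unfold minus, plus, opp, F; simpl.
    assert (0 < 32 / (b * (b * (b * 1)))) by (apply Rdiv_lt_0_compat; [lra | repeat apply Rmult_lt_0_compat; lra]).
    lra.
Qed.

Lemma RInt_g_integrand_bound b : 0 <= b -> RInt (g_integrand s) 0 b <= Kmom 3 s + 32.
Proof.
  intros Hb. pose proof (Kmom_nonneg 3 s s_pos).
  assert (Hsmall : forall c, 0 <= c <= 1 -> RInt (g_integrand s) 0 c <= Kmom 3 s).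
  { intros c Hc. eapply Rle_trans.
    - apply RInt_le_const; [lra | apply g_integrand_ex_RInt | intros; apply g_integrand_le].
    - nra. }
  destruct (Rle_dec b 1).
  - pose proof (Hsmall b ltac:(lra)). lra.
  - rewrite (RInt_Chasles_R _ 0 1 b) by apply g_integrand_ex_RInt.
    pose proof (Hsmall 1 ltac:(lra)). pose proof (RInt_g_integrand_tail 1 b ltac:(lra) ltac:(lra)).
    simpl in *. lra.
Qed.

Let cont x (_ : 0 <= x) := g_integrand_cont x.
Let nonneg x (_ : 0 <= x) := g_integrand_nonneg x.
Let bnd b (Hb : 0 <= b) := RInt_g_integrand_bound b Hb.

Lemma Jg_nonneg : 0 <= Jg s.
Proof. exact (half_line_int_nonneg _ _ cont nonneg bnd). Qed.

Lemma RInt_le_Jg b : 0 <= b -> RInt (g_integrand s) 0 b <= Jg s.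
Proof. exact (RInt_le_half_line_int _ _ cont nonneg bnd b). Qed.

Lemma Jg_tail eps : 0 < eps -> exists M, 0 <= M /\ forall b, M <= b -> Jg s - eps < RInt (g_integrand s) 0 b.
Proof. exact (half_line_int_tail _ _ cont nonneg bnd eps). Qed.

Lemma Jg_tail_bound W : 1 <= W -> Jg s - RInt (g_integrand s) 0 W <= 32 / W ^ 3.
Proof.
  intros HW.
  assert (H : Rbar_le (Jg s) (RInt (g_integrand s) 0 W + 32 / W ^ 3)).
  { apply is_lim_seq_le_loc with (2 := half_line_int_lim _ _ cont nonneg bnd) (3 := is_lim_seq_const _).
    destruct (nfloor_ex W ltac:(lra)) as [N HN]. exists (S N). intros n Hn.
    apply le_INR in Hn. rewrite S_INR in Hn.
    rewrite (RInt_Chasles_R _ 0 W (INR n)) by apply g_integrand_ex_RInt.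
    pose proof (RInt_g_integrand_tail W (INR n) HW ltac:(lra)). lra. }
  change (Jg s <= RInt (g_integrand s) 0 W + 32 / W ^ 3) in H. lra.
Qed.

End GIntegrand.

Definition g_kernel (s r : R) : R := K0''' r * r / sqrt (r ^ 2 - s ^ 2).

Lemma g_kernel_cont s r : 0 < s -> s < r -> continuous (g_kernel s) r.
Proof.
  intros Hs Hr.
  apply (continuous_ext_loc (g_kernel s) (fun r => (- Kmom 3 r) * (r / sqrt (r ^ 2 - s ^ 2))) r).
  - generalize (locally_above s r Hr). apply filter_imp. intros y Hy. unfold g_kernel.
    rewrite K0'''_eq by lra. unfold Rdiv; rewrite Rmult_assoc; reflexivity.
  - apply (continuous_mult (K:=R_AbsRing) (fun r => - Kmom 3 r) (fun r => r / sqrt (r ^ 2 - s ^ 2))).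
    + apply (continuous_opp (V:=R_NormedModule) (Kmom 3)).
      apply continuity_pt_filterlim, Kmom_continuous; lra.
    + apply (ex_derive_continuous (V:=R_NormedModule)). auto_derive.
      repeat split; try nra. apply Rgt_not_eq, sqrt_lt_R0. nra.
Qed.

(* Change of variables r = sqrt(s^2 + w^2): int_a^b g_kernel = - int g_integrand. *)
Lemma RInt_g_kernel_subst s a b : 0 < s -> s < a -> a <= b ->
  RInt (g_kernel s) a b = - RInt (g_integrand s) (sqrt (a ^ 2 - s ^ 2)) (sqrt (b ^ 2 - s ^ 2)).
Proof.
  intros Hs Ha Hb.
  set (w1 := sqrt (a ^ 2 - s ^ 2)). set (w2 := sqrt (b ^ 2 - s ^ 2)).
  assert (Hw1 : 0 <= w1) by apply sqrt_pos.
  assert (Hw12 : w1 <= w2) by (apply sqrt_le_1_alt; nra).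
  set (radius := fun y => sqrt (s ^ 2 + y ^ 2)).
  assert (Hradius : forall c, s <= c -> radius (sqrt (c ^ 2 - s ^ 2)) = c).
  { intros c Hc. unfold radius. rewrite pow2_sqrt by nra.
    replace (s ^ 2 + (c ^ 2 - s ^ 2)) with (c ^ 2) by ring. apply sqrt_pow2; lra. }
  pose proof (RInt_comp (V:=R_CompleteNormedModule) (g_kernel s) radius
                (fun y => y / sqrt (s ^ 2 + y ^ 2)) w1 w2) as HC.
  assert (Hr1 : radius w1 = a) by (apply Hradius; lra).
  assert (Hr2 : radius w2 = b) by (apply Hradius; lra).
  rewrite Hr1, Hr2 in HC. rewrite <- HC.
  - rewrite <- (RInt_opp (V:=R_CompleteNormedModule)) by apply g_integrand_ex_RInt, Hs.
    apply RInt_ext. rewrite Rmin_left, Rmax_right by lra. intros y Hy.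
    unfold scal, opp; simpl; unfold mult; simpl. unfold radius, g_kernel, g_integrand.
    set (q := sqrt (s ^ 2 + y ^ 2)).
    assert (Hq : 0 < q) by (apply sqrt_lt_R0; nra).
    assert (Hq2 : q ^ 2 = s ^ 2 + y ^ 2) by (apply pow2_sqrt; nra).
    rewrite K0'''_eq by lra.
    replace (q ^ 2 - s ^ 2) with (y ^ 2) by lra. rewrite sqrt_pow2 by lra.
    change (sqrt (s * (s * 1) + y * (y * 1))) with q. field. lra.
  - intros x Hx. rewrite Rmin_left, Rmax_right in Hx by lra. apply g_kernel_cont; auto.
    apply Rlt_le_trans with a; [lra |]. rewrite <- Hr1.
    unfold radius. apply sqrt_le_1_alt. nra.
  - intros x Hx. rewrite Rmin_left, Rmax_right in Hx by lra. split.
    + unfold radius. auto_derive; [nra |]. simpl. field. apply Rgt_not_eq, sqrt_lt_R0. nra.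
    + apply (ex_derive_continuous (V:=R_NormedModule)). auto_derive.
      repeat split; try nra. apply Rgt_not_eq, sqrt_lt_R0. nra.
Qed.

Lemma g_kernel_improper s : 0 < s -> improper_int_open (g_kernel s) s (- Jg s).
Proof.
  intros Hs eps He.
  destruct (Jg_tail s Hs (eps / 2) ltac:(lra)) as [W0 [HW0 HT]].
  set (K3 := Kmom 3 s + 1). assert (HK3 : 0 < K3) by (unfold K3; pose proof (Kmom_nonneg 3 s Hs); lra).
  set (eta := eps / (2 * K3)). assert (Heta : 0 < eta) by (unfold eta; apply Rdiv_lt_0_compat; lra).
  exists (Rmin 1 (eta ^ 2 / (2 * s + 1))), (s + W0 + 1). split.
  { apply Rmin_pos; [lra | apply Rdiv_lt_0_compat; nra]. }
  intros a' b Ha' Hb.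
  pose proof (Rmin_l 1 (eta ^ 2 / (2 * s + 1))). pose proof (Rmin_r 1 (eta ^ 2 / (2 * s + 1))).
  assert (Hex : ex_RInt (g_kernel s) a' b).
  { apply (ex_RInt_continuous (V:=R_CompleteNormedModule)).
    intros z Hz. rewrite Rmin_left, Rmax_right in Hz by lra. apply g_kernel_cont; lra. }
  exists (ex_RInt_Reals_0 _ _ _ Hex).
  rewrite <- RInt_Reals. rewrite RInt_g_kernel_subst by lra.
  set (w1 := sqrt (a' ^ 2 - s ^ 2)). set (w2 := sqrt (b ^ 2 - s ^ 2)).
  (* the lower endpoint w1 is small, the upper endpoint w2 is large *)
  assert (Hw1 : 0 <= w1) by apply sqrt_pos.
  assert (Hw1e : w1 < eta).
  { unfold w1. rewrite <- (sqrt_pow2 eta) by lra. apply sqrt_lt_1_alt. split; [nra |].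
    assert ((a' - s) * (2 * s + 1) < eta ^ 2).
    { apply Rmult_lt_reg_r with (/ (2 * s + 1)); [apply Rinv_0_lt_compat; lra |].
      replace ((a' - s) * (2 * s + 1) * / (2 * s + 1)) with (a' - s) by (field; lra).
      unfold Rdiv in *. lra. }
    nra. }
  assert (Hw2 : W0 <= w2).
  { unfold w2. rewrite <- (sqrt_pow2 W0) by lra. apply sqrt_le_1_alt. nra. }
  pose proof (HT w2 Hw2). pose proof (RInt_le_Jg s Hs w2 ltac:(lra)).
  rewrite (RInt_Chasles_R (g_integrand s) 0 w1 w2) in * by apply g_integrand_ex_RInt, Hs.
  assert (0 <= RInt (g_integrand s) 0 w1)
    by (apply RInt_ge_0; [lra | apply g_integrand_ex_RInt, Hs | intros; apply g_integrand_nonneg, Hs]).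
  assert (RInt (g_integrand s) 0 w1 <= w1 * Kmom 3 s).
  { replace (w1 * Kmom 3 s) with ((w1 - 0) * Kmom 3 s) by ring.
    apply RInt_le_const; [lra | apply g_integrand_ex_RInt, Hs | intros; apply g_integrand_le, Hs]. }
  assert (w1 * Kmom 3 s <= eta * K3) by (unfold K3; pose proof (Kmom_nonneg 3 s Hs); nra).
  assert (eta * K3 = eps / 2) by (unfold eta; field; lra).
  apply Rabs_def1; lra.
Qed.

Lemma g_eq s : 0 < s -> g s = s / (4 * PI) * Jg s.
Proof.
  intros Hs. unfold g. rewrite (IntOpen_eq _ _ (- Jg s)) by apply g_kernel_improper, Hs.
  pose proof PI_RGT_0. field. lra.
Qed.

Lemma g_nonneg s : 0 < s -> 0 <= g s.
Proof.
  intros Hs. rewrite g_eq by auto. pose proof PI_RGT_0.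
  apply Rmult_le_pos; [apply Rdiv_le_0_compat; lra | apply Jg_nonneg; auto].
Qed.

(** * Continuity of g, and the coefficients Gamma and B *)

(* Mean value theorem with |K_3'| = K_4 nonincreasing. *)
Lemma Kmom3_lipschitz c x y : 0 < c -> c <= x -> c <= y ->
  Rabs (Kmom 3 x - Kmom 3 y) <= Kmom 4 c * Rabs (x - y).
Proof.
  intros Hc Hx Hy.
  destruct (MVT_gen (Kmom 3) y x (fun z => - Kmom 4 z)) as [z [Hz ->]].
  - intros z Hz. apply is_derive_Reals, Kmom_derivable.
    unfold Rmin, Rmax in Hz; destruct Rle_dec in Hz; lra.
  - intros z Hz. apply Kmom_continuous. unfold Rmin, Rmax in Hz; destruct Rle_dec in Hz; lra.
  - assert (Hz' : c <= z) by (unfold Rmin, Rmax in Hz; destruct Rle_dec in Hz; lra).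
    rewrite Rabs_mult, Rabs_Ropp, Rabs_pos_eq by (apply Kmom_nonneg; lra).
    apply Rmult_le_compat_r; [apply Rabs_pos | apply Kmom_antitone; lra].
Qed.

Lemma sqrt_sum_sq_lipschitz s s0 w : 0 < s -> 0 < s0 ->
  Rabs (sqrt (s ^ 2 + w ^ 2) - sqrt (s0 ^ 2 + w ^ 2)) <= Rabs (s - s0).
Proof.
  intros Hs Hs0.
  pose proof (sqrt_sum_sq_ge s w ltac:(lra)). pose proof (sqrt_sum_sq_ge s0 w ltac:(lra)).
  set (A := sqrt (s ^ 2 + w ^ 2)) in *. set (B := sqrt (s0 ^ 2 + w ^ 2)) in *.
  assert (HA : A ^ 2 = s ^ 2 + w ^ 2) by (apply pow2_sqrt; nra).
  assert (HB : B ^ 2 = s0 ^ 2 + w ^ 2) by (apply pow2_sqrt; nra).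
  assert (HAB : (A - B) * (A + B) = (s - s0) * (s + s0)) by nra.
  unfold Rabs; repeat destruct Rcase_abs; nra.
Qed.

Lemma RInt_g_integrand_lipschitz c s s0 W : 0 < c -> c <= s -> c <= s0 -> 0 <= W ->
  Rabs (RInt (g_integrand s) 0 W - RInt (g_integrand s0) 0 W) <= W * (Kmom 4 c * Rabs (s - s0)).
Proof.
  intros Hc Hs Hs0 HW.
  rewrite <- (RInt_minus (V:=R_CompleteNormedModule)) by (apply g_integrand_ex_RInt; lra).
  replace W with (W - 0) at 2 by ring.
  apply abs_RInt_le_const; [lra | apply (ex_RInt_minus (V:=R_CompleteNormedModule)); apply g_integrand_ex_RInt; lra |].
  intros w _. unfold g_integrand. eapply Rle_trans.
  - apply Kmom3_lipschitz with (c := c); [lra | |].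
    + pose proof (sqrt_sum_sq_ge s w ltac:(lra)). lra.
    + pose proof (sqrt_sum_sq_ge s0 w ltac:(lra)). lra.
  - apply Rmult_le_compat_l; [apply Kmom_nonneg; lra | apply sqrt_sum_sq_lipschitz; lra].
Qed.

(* Continuity of Jg: split at W where both tails are below eps/3. *)
Lemma Jg_continuous s0 : 0 < s0 -> continuity_pt Jg s0.
Proof.
  intros Hs0 eps He.
  set (L := Kmom 4 (s0 / 2)). assert (HL : 0 <= L) by (apply Kmom_nonneg; lra).
  set (W := 1 + 96 / eps).
  assert (Heps96 : 0 < 96 / eps) by (apply Rdiv_lt_0_compat; lra).
  assert (HW : 1 <= W) by (unfold W; lra).
  assert (HWt : 32 / W ^ 3 < eps / 3).
  { assert (32 / W ^ 3 <= 32 / W) by (apply Rmult_le_compat_l; [lra | apply Rinv_le_contravar; simpl; nra]).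
    assert (32 / W < eps / 3).
    { apply (Rmult_lt_reg_r (3 * W)); [lra |].
      replace (32 / W * (3 * W)) with 96 by (field; lra).
      replace (eps / 3 * (3 * W)) with (eps * W) by field.
      replace (eps * W) with (eps + 96) by (unfold W; field; lra). lra. }
    lra. }
  set (delta := Rmin (s0 / 2) (eps / (3 * (W * L + 1)))).
  assert (Hdelta : 0 < delta) by (apply Rmin_pos; [lra | apply Rdiv_lt_0_compat; nra]).
  exists delta. split; auto. intros s [_ Hs]. simpl in Hs |- *. unfold R_dist, Rdist, delta in *.
  pose proof (Rmin_l (s0 / 2) (eps / (3 * (W * L + 1)))).
  pose proof (Rmin_r (s0 / 2) (eps / (3 * (W * L + 1)))).
  assert (Hsp : s0 / 2 < s) by (apply Rabs_def2 in Hs; lra).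
  pose proof (Jg_tail_bound s ltac:(lra) W HW). pose proof (RInt_le_Jg s ltac:(lra) W ltac:(lra)).
  pose proof (Jg_tail_bound s0 Hs0 W HW). pose proof (RInt_le_Jg s0 Hs0 W ltac:(lra)).
  pose proof (RInt_g_integrand_lipschitz (s0 / 2) s s0 W ltac:(lra) ltac:(lra) ltac:(lra) ltac:(lra)) as Hd.
  fold L in Hd. apply Rabs_le_between in Hd.
  assert (W * (L * Rabs (s - s0)) <= W * L * (eps / (3 * (W * L + 1)))).
  { rewrite <- Rmult_assoc. apply Rmult_le_compat_l; [nra | lra]. }
  assert (W * L * (eps / (3 * (W * L + 1))) < eps / 3).
  { apply Rmult_lt_reg_r with (3 * (W * L + 1)); [nra |].
    replace (W * L * (eps / (3 * (W * L + 1))) * (3 * (W * L + 1))) with (W * L * eps) by (field; nra).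
    nra. }
  apply Rabs_def1; lra.
Qed.

Lemma g_cont s : 0 < s -> continuous g s.
Proof.
  intros Hs. apply (continuous_ext_loc g (fun s => s / (4 * PI) * Jg s) s).
  - generalize (locally_above 0 s Hs). apply filter_imp. intros y Hy. symmetry. apply g_eq; auto.
  - apply (continuous_mult (K:=R_AbsRing) (fun s => s / (4 * PI)) Jg).
    + apply (ex_derive_continuous (V:=R_NormedModule)). auto_derive. auto.
    + apply continuity_pt_filterlim, Jg_continuous; auto.
Qed.

Lemma Bf_cont beta s : 0 < s -> continuous (Bf beta) s.
Proof.
  intros Hs. apply (continuous_mult (K:=R_AbsRing) (fun _ => beta / 2) g).
  - apply continuous_const.
  - apply g_cont; auto.
Qed.

Lemma Gam_cont beta s : 0 < s -> continuous (Gam beta) s.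
Proof.
  intros Hs. apply (continuous_mult (K:=R_AbsRing) (fun s => beta * PI / 4 * s ^ 2) g).
  - apply (ex_derive_continuous (V:=R_NormedModule)). auto_derive. auto.
  - apply g_cont; auto.
Qed.

Lemma Bf_nonneg beta s : 0 < beta -> 0 < s -> 0 <= Bf beta s.
Proof. intros Hb Hs. apply Rmult_le_pos; [lra | apply g_nonneg; auto]. Qed.

Lemma Gam_nonneg beta s : 0 < beta -> 0 < s -> 0 <= Gam beta s.
Proof.
  intros Hb Hs. pose proof PI_RGT_0. unfold Gam.
  apply Rmult_le_pos; [| apply g_nonneg; auto].
  apply Rmult_le_pos; [| apply pow_le; lra]. apply Rmult_le_pos; [apply Rmult_le_pos |]; lra.
Qed.

(** * tau_k as the solution of tau' = c B tau + Gamma, tau(t0) = 0 *)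

Definition Bint (beta t0 u : R) : R := RInt (Bf beta) t0 u.
Definition tau_integrand (beta t0 c s : R) : R := Gam beta s * exp (- c * Bint beta t0 s).
Definition tau_sol (beta t0 c u : R) : R :=
  exp (c * Bint beta t0 u) * RInt (tau_integrand beta t0 c) t0 u.

Section TauSolution.
Variables (beta t0 c : R).
Hypothesis t0_pos : 0 < t0.

Lemma Bint_derivable u : 0 < u -> derivable_pt_lim (Bint beta t0) u (Bf beta u).
Proof. intros Hu. apply RInt_derivable_pos; auto. intros; apply Bf_cont; auto. Qed.

Lemma Bint_cont u : 0 < u -> continuity_pt (Bint beta t0) u.
Proof. intros Hu. apply derivable_continuous_pt. eexists. apply Bint_derivable; auto. Qed.

Lemma tau_integrand_cont s : 0 < s -> continuous (tau_integrand beta t0 c) s.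
Proof.
  intros Hs. apply (continuous_mult (K:=R_AbsRing) (Gam beta) (fun s => exp (- c * Bint beta t0 s))).
  - apply Gam_cont; auto.
  - apply (continuous_comp (fun s => - c * Bint beta t0 s) exp).
    + apply (continuous_mult (K:=R_AbsRing) (fun _ => - c) (Bint beta t0)); [apply continuous_const |].
      apply continuity_pt_filterlim, Bint_cont; auto.
    + apply (ex_derive_continuous (V:=R_NormedModule)). auto_derive. auto.
Qed.

Lemma tau_sol_derivable u : 0 < u ->
  derivable_pt_lim (tau_sol beta t0 c) u (c * Bf beta u * tau_sol beta t0 c u + Gam beta u).
Proof.
  intros Hu. unfold tau_sol.
  set (E := exp (c * Bint beta t0 u)). set (I := RInt (tau_integrand beta t0 c) t0 u).
  assert (HE : E * exp (- c * Bint beta t0 u) = 1)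
    by (unfold E; rewrite <- exp_plus, <- exp_0; f_equal; ring).
  replace (c * Bf beta u * (E * I) + Gam beta u)
    with (c * Bf beta u * E * I + E * (Gam beta u * exp (- c * Bint beta t0 u))).
  2:{ transitivity (c * Bf beta u * E * I + Gam beta u * (E * exp (- c * Bint beta t0 u)));
      [| rewrite HE]; ring. }
  apply (derivable_pt_lim_mult (fun u => exp (c * Bint beta t0 u))).
  - apply (derivable_pt_lim_exp_comp (fun u => c * Bint beta t0 u)).
    apply (derivable_pt_lim_scal (Bint beta t0) c), Bint_derivable; auto.
  - apply (RInt_derivable_pos (tau_integrand beta t0 c)); auto. apply tau_integrand_cont.
Qed.

Lemma tau_sol_t0 : tau_sol beta t0 c t0 = 0.
Proof. unfold tau_sol. rewrite RInt_point. unfold zero; simpl. ring. Qed.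

Lemma tau_sol_nonneg u : 0 < beta -> t0 <= u -> 0 <= tau_sol beta t0 c u.
Proof.
  intros Hb Hu. apply Rmult_le_pos; [apply Rlt_le, exp_pos |].
  apply RInt_ge_0; auto.
  - apply ex_RInt_pos; try lra. apply tau_integrand_cont.
  - intros x Hx. apply Rmult_le_pos; [apply Gam_nonneg; lra | apply Rlt_le, exp_pos].
Qed.

Lemma tau_sol_cont u : 0 < u -> continuity_pt (tau_sol beta t0 c) u.
Proof. intros Hu. apply derivable_continuous_pt. eexists. apply tau_sol_derivable; auto. Qed.

End TauSolution.

Lemma tau_eq beta k t0 t : 0 < t0 -> t0 < t ->
  tau beta k t0 t = tau_sol beta t0 ((INR k + 1) / INR k) t.
Proof.
  intros H1 H2. set (c := (INR k + 1) / INR k).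
  assert (HB : forall a b, 0 < a -> 0 < b -> ex_RInt (Bf beta) a b)
    by (intros; apply ex_RInt_pos; auto; intros; apply Bf_cont; auto).
  set (F := fun s => Gam beta s * exp (c * Defs.RInt (Bf beta) s t)).
  set (G := fun s => exp (c * Bint beta t0 t) * tau_integrand beta t0 c s).
  (* exp(c int_s^t B) = exp(c Bint(t)) exp(-c Bint(s)) *)
  assert (HFG : forall s, t0 < s < t -> G s = F s).
  { intros s Hs. unfold G, F, tau_integrand.
    rewrite Defs_RInt_eq by (apply ex_RInt_Reals_0, HB; lra).
    replace (RInt (Bf beta) s t) with (Bint beta t0 t - Bint beta t0 s)
      by (unfold Bint; rewrite (RInt_Chasles_R _ t0 s t) by (apply HB; lra); ring).
    replace (c * (Bint beta t0 t - Bint beta t0 s)) with (c * Bint beta t0 t + - c * Bint beta t0 s) by ring.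
    rewrite exp_plus. ring. }
  assert (HG : ex_RInt G t0 t).
  { apply (ex_RInt_scal (V:=R_CompleteNormedModule)), ex_RInt_pos; try lra. apply tau_integrand_cont; auto. }
  assert (HF : ex_RInt F t0 t) by (apply (ex_RInt_ext G); [rewrite Rmin_left, Rmax_right by lra; auto | auto]).
  unfold tau. fold F. rewrite Defs_RInt_eq by (apply ex_RInt_Reals_0; auto).
  rewrite <- (RInt_ext G) by (rewrite Rmin_left, Rmax_right by lra; auto).
  unfold G. rewrite RInt_scal_R; [reflexivity |].
  apply ex_RInt_pos; try lra. apply tau_integrand_cont; auto.
Qed.

(** * The majorant sequence a_n *)

(* a_1 = 1 and (n-1) a_n = n/2 * sum_{j=1}^{n-1} a_j a_(n-j) for n >= 2 (so a_n = n^(n-1)/n!,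
   the coefficients of -W(-x)/x). [tree_coef_upto N m] computes a_m by recursion on a fuel N >= m. *)
Fixpoint tree_coef_upto (N : nat) : nat -> R :=
  match N with
  | O => fun _ => 1
  | S N' => fun m =>
      if (Nat.leb m N' || Nat.leb m 1)%bool then tree_coef_upto N' m
      else INR m / 2 / INR (m - 1) *
           sum_f_R0 (fun j => tree_coef_upto N' (S j) * tree_coef_upto N' (m - S j)) (m - 2)
  end.

Definition tree_coef (n : nat) : R := tree_coef_upto n n.

Lemma tree_coef_upto_stable N m : (m <= N)%nat -> tree_coef_upto N m = tree_coef m.
Proof.
  induction N; intros Hm.
  - replace m with 0%nat by lia. reflexivity.
  - destruct (Nat.eq_dec m (S N)) as [-> | E]; [reflexivity |].
    simpl. replace (Nat.leb m N) with true by (symmetry; apply Nat.leb_le; lia). apply IHN. lia.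
Qed.

Lemma tree_coef_1 : tree_coef 1 = 1.
Proof. reflexivity. Qed.

Lemma tree_coef_rec n : (2 <= n)%nat ->
  INR (n - 1) * tree_coef n = INR n / 2 * sum_f_R0 (fun j => tree_coef (S j) * tree_coef (n - S j)) (n - 2).
Proof.
  intros Hn. destruct n as [|N]; [lia |].
  assert (Hpos : 0 < INR (S N - 1)) by (apply lt_0_INR; lia).
  unfold tree_coef at 1.
  change (tree_coef_upto (S N) (S N)) with
    (if (Nat.leb (S N) N || Nat.leb (S N) 1)%bool then tree_coef_upto N (S N)
     else INR (S N) / 2 / INR (S N - 1) *
          sum_f_R0 (fun j => tree_coef_upto N (S j) * tree_coef_upto N (S N - S j)) (S N - 2)).
  replace (Nat.leb (S N) N) with false by (symmetry; apply Nat.leb_gt; lia).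
  replace (Nat.leb (S N) 1) with false by (symmetry; apply Nat.leb_gt; lia). simpl orb. cbv iota beta.
  rewrite (sum_eq _ (fun j => tree_coef (S j) * tree_coef (S N - S j)))
    by (intros i Hi; rewrite !tree_coef_upto_stable by lia; reflexivity).
  field. lra.
Qed.

Lemma sum_nonneg (f : nat -> R) N : (forall i, (i <= N)%nat -> 0 <= f i) -> 0 <= sum_f_R0 f N.
Proof.
  induction N; intros H; simpl; [apply H; lia |].
  apply Rplus_le_le_0_compat; [apply IHN; intros i Hi |]; apply H; lia.
Qed.

Lemma tree_coef_nonneg n : 0 <= tree_coef n.
Proof.
  induction n as [n IH] using (well_founded_induction Wf_nat.lt_wf).
  destruct (Nat.le_gt_cases 2 n) as [Hn | Hn].
  - assert (Hpos : 0 < INR (n - 1)) by (apply lt_0_INR; lia).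
    apply Rmult_le_reg_l with (INR (n - 1)); [exact Hpos |]. rewrite Rmult_0_r, tree_coef_rec by auto.
    apply Rmult_le_pos; [pose proof (pos_INR n); lra |].
    apply sum_nonneg. intros j Hj. apply Rmult_le_pos; apply IH; lia.
  - destruct n as [|[|n]]; [cbn; lra | rewrite tree_coef_1; lra | lia].
Qed.

Lemma sum_rev (f : nat -> R) k : sum_f_R0 f k = sum_f_R0 (fun p => f (k - p)%nat) k.
Proof.
  revert f. induction k; intros f; [reflexivity |].
  rewrite decomp_sum by lia. simpl Init.Nat.pred. rewrite (IHk (fun i => f (S i))).
  rewrite tech5. replace (S k - S k)%nat with 0%nat by lia.
  rewrite Rplus_comm. f_equal. apply sum_eq. intros i Hi. f_equal. lia.
Qed.

(* Symmetrized recurrence: it says (y S)' = S * (y S)' coefficientwise, for S = sum a_(n+1) y^n. *)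
Lemma tree_coef_deriv_rec k : INR (S k) * tree_coef (S (S k))
  = sum_f_R0 (fun p => INR (S p) * tree_coef (S p) * tree_coef (S k - p)%nat) k.
Proof.
  pose proof (tree_coef_rec (S (S k)) ltac:(lia)) as H.
  replace (S (S k) - 1)%nat with (S k) in H by lia. replace (S (S k) - 2)%nat with k in H by lia.
  set (X := sum_f_R0 (fun p => INR (S p) * tree_coef (S p) * tree_coef (S k - p)%nat) k).
  assert (HX : X = sum_f_R0 (fun p => INR (S k - p) * tree_coef (S k - p)%nat * tree_coef (S p)) k).
  { unfold X. rewrite sum_rev. apply sum_eq. intros i Hi.
    replace (S (k - i)) with (S k - i)%nat by lia. replace (S k - (k - i))%nat with (S i) by lia. ring. }
  assert (H2 : X + X = INR (S (S k)) * sum_f_R0 (fun j => tree_coef (S j) * tree_coef (S (S k) - S j)%nat) k).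
  { rewrite HX at 2. unfold X. rewrite <- sum_plus, scal_sum. apply sum_eq. intros i Hi.
    replace (S (S k) - S i)%nat with (S k - i)%nat by lia.
    rewrite minus_INR by lia. rewrite !S_INR. ring. }
  rewrite H. lra.
Qed.

(** * Partial sums of the majorant series and the Lambert W function *)

Lemma cauchy_product_le (A B : nat -> R) M : (forall i, 0 <= A i) -> (forall i, 0 <= B i) ->
  sum_f_R0 (fun k => sum_f_R0 (fun p => A p * B (k - p)%nat) k) M <= sum_f_R0 A M * sum_f_R0 B M.
Proof.
  intros HA HB. destruct M as [|M]; [simpl; lra |].
  rewrite cauchy_finite by lia.
  assert (0 <= sum_f_R0 (fun k => sum_f_R0 (fun l => A (S (l + k)) * B (S M - l)%nat)
                                            (Init.Nat.pred (S M - k))) (Init.Nat.pred (S M))).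
  { apply cond_pos_sum. intros. apply cond_pos_sum. intros. apply Rmult_le_pos; auto. }
  lra.
Qed.

Lemma sum_mul_pow0 (c : nat -> R) N : sum_f_R0 (fun n => c n * 0 ^ n) N = c 0%nat.
Proof. induction N; [simpl; ring | rewrite tech5, IHN; simpl; ring]. Qed.

Definition tree_sum (N : nat) (y : R) : R := sum_f_R0 (fun n => tree_coef (S n) * y ^ n) N.
Definition shifted_coef (j : nat) : R := match j with O => 0 | _ => tree_coef j end.
Definition tree_poly (N : nat) (y : R) : R := sum_f_R0 (fun j => shifted_coef j * y ^ j) N.

Lemma tree_poly_S N y : tree_poly (S N) y = y * tree_sum N y.
Proof.
  induction N; unfold tree_poly, tree_sum in *; [simpl; ring |].
  rewrite tech5, IHN, tech5. simpl. ring.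
Qed.

Lemma tree_sum_0 N : tree_sum N 0 = 1.
Proof. unfold tree_sum. rewrite sum_mul_pow0. apply tree_coef_1. Qed.

(* Derivative comparison S_(N+1)' <= P_(N+1)' S_(N+1) on [0, +oo), from the symmetrized recurrence. *)
Lemma tree_sum_deriv_le N z : 0 <= z ->
  sum_f_R0 (fun k => INR (S k) * tree_coef (S (S k)) * z ^ k) N
  <= sum_f_R0 (fun k => INR (S k) * shifted_coef (S k) * z ^ k) N * tree_sum (S N) z.
Proof.
  intros Hz.
  set (A := fun p => INR (S p) * tree_coef (S p) * z ^ p).
  set (B := fun m => tree_coef (S m) * z ^ m).
  assert (HA : forall i, 0 <= A i).
  { intros i. apply Rmult_le_pos; [apply Rmult_le_pos; [apply pos_INR | apply tree_coef_nonneg] | apply pow_le; auto]. }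
  assert (HB : forall i, 0 <= B i) by (intros i; apply Rmult_le_pos; [apply tree_coef_nonneg | apply pow_le; auto]).
  assert (E : sum_f_R0 (fun k => INR (S k) * tree_coef (S (S k)) * z ^ k) N
            = sum_f_R0 (fun k => sum_f_R0 (fun p => A p * B (k - p)%nat) k) N).
  { apply sum_eq. intros k Hk. rewrite tree_coef_deriv_rec, Rmult_comm, scal_sum. apply sum_eq. intros p Hp.
    unfold A, B. replace (S k - p)%nat with (S (k - p)) by lia.
    replace (z ^ k) with (z ^ p * z ^ (k - p)) by (rewrite <- pow_add; f_equal; lia). ring. }
  rewrite E. eapply Rle_trans; [apply cauchy_product_le; auto |].
  change (sum_f_R0 (fun k => INR (S k) * shifted_coef (S k) * z ^ k) N) with (sum_f_R0 A N).
  apply Rmult_le_compat_l; [apply cond_pos_sum; auto |].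
  unfold tree_sum. rewrite tech5. pose proof (HB (S N)). unfold B in *. lra.
Qed.

(* S_N(y) <= exp(P_N(y)) for y >= 0: the function S_N e^(-P_N) equals 1 at 0 and is nonincreasing. *)
Lemma tree_sum_le_exp N y : 0 <= y -> tree_sum N y <= exp (tree_poly N y).
Proof.
  intros Hy. destruct N as [|N].
  { unfold tree_sum, tree_poly. simpl. rewrite tree_coef_1, Rmult_0_l, exp_0. lra. }
  destruct (Req_dec y 0) as [-> | Hy0].
  { rewrite tree_sum_0. unfold tree_poly. rewrite sum_mul_pow0. simpl. rewrite exp_0. lra. }
  set (dS := fun y => sum_f_R0 (fun k => INR (S k) * tree_coef (S (S k)) * y ^ k) N).
  set (dP := fun y => sum_f_R0 (fun k => INR (S k) * shifted_coef (S k) * y ^ k) N).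
  set (Q := fun y => - (tree_sum (S N) y * exp (- tree_poly (S N) y))).
  set (dQ := fun y => - ((dS y - dP y * tree_sum (S N) y) * exp (- tree_poly (S N) y))).
  assert (HQ : forall z, derivable_pt_lim Q z (dQ z)).
  { intros z. unfold Q, dQ. apply derivable_pt_lim_opp.
    replace ((dS z - dP z * tree_sum (S N) z) * exp (- tree_poly (S N) z))
      with (dS z * exp (- tree_poly (S N) z) + tree_sum (S N) z * (- dP z * exp (- tree_poly (S N) z))) by ring.
    apply (derivable_pt_lim_mult (tree_sum (S N)) (fun y => exp (- tree_poly (S N) y))).
    - exact (derivable_pt_lim_finite_sum (fun n => tree_coef (S n)) z (S N)).
    - apply (derivable_pt_lim_exp_comp (fun y => - tree_poly (S N) y)), derivable_pt_lim_opp.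
      exact (derivable_pt_lim_finite_sum shifted_coef z (S N)). }
  assert (Hmono : Q 0 <= Q y).
  { apply (nondecreasing_of_deriv_nonneg Q dQ); [lra | | intros; apply HQ |].
    - intros x _. apply derivable_continuous_pt. eexists. apply HQ.
    - intros x Hx. unfold dQ. pose proof (tree_sum_deriv_le N x ltac:(lra)).
      pose proof (exp_pos (- tree_poly (S N) x)). fold (dS x) (dP x) in *. nra. }
  unfold Q in Hmono. rewrite tree_sum_0 in Hmono. unfold tree_poly at 1 in Hmono.
  rewrite sum_mul_pow0 in Hmono. simpl shifted_coef in Hmono. rewrite Ropp_0, exp_0 in Hmono.
  assert (Hinv : exp (- tree_poly (S N) y) * exp (tree_poly (S N) y) = 1)
    by (rewrite <- exp_plus, <- exp_0; f_equal; ring).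
  pose proof (exp_pos (tree_poly (S N) y)). nra.
Qed.

Lemma tree_sum_fixed_point_bound x T : 0 < x -> x * exp T = T -> 0 <= T ->
  forall N, x * tree_sum N x <= T.
Proof.
  intros Hx HT HT0 N. induction N.
  - unfold tree_sum. simpl. rewrite tree_coef_1, <- HT.
    pose proof (exp_ineq1_le T). nra.
  - rewrite <- HT. apply Rmult_le_compat_l; [lra |].
    eapply Rle_trans; [apply tree_sum_le_exp; lra |].
    rewrite tree_poly_S. apply exp_le; auto.
Qed.

Lemma LambertW_spec x : 0 < x -> exp 1 * x < 1 ->
  -1 <= LambertW (- x) < 0 /\ LambertW (- x) * exp (LambertW (- x)) = - x.
Proof.
  intros Hx H1.
  assert (Hex : exists w, -1 <= w /\ w * exp w = - x).
  { assert (Hc : continuity (fun w => w * exp w + x)).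
    { intros w. apply cont_of_ex_derive. auto_derive. auto. }
    assert (He1 : exp (-1) * exp 1 = 1) by (rewrite <- exp_plus; replace (-1 + 1) with 0 by ring; apply exp_0).
    pose proof (exp_pos 1). pose proof (exp_pos (-1)).
    destruct (IVT _ (-1) 0 Hc ltac:(lra)) as [w [Hw Hw0]].
    - assert (x < exp (-1)) by nra. lra.
    - rewrite Rmult_0_l. lra.
    - exists w. split; lra. }
  unfold LambertW.
  destruct (epsilon_spec (inhabits 0) (fun w => -1 <= w /\ w * exp w = - x) Hex) as [Hw1 Hw2].
  set (w := epsilon (inhabits 0) (fun w => -1 <= w /\ w * exp w = - x)) in *.
  repeat split; auto. destruct (Rlt_or_le w 0) as [h | h]; auto. pose proof (exp_pos w). nra.
Qed.

Lemma tree_sum_le_negWq x : 0 <= x -> exp 1 * x < 1 -> forall N, tree_sum N x <= negWq x.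
Proof.
  intros Hx H1 N. unfold negWq. destruct (Req_EM_T x 0) as [-> | E].
  { rewrite tree_sum_0. lra. }
  destruct (LambertW_spec x ltac:(lra) H1) as [[Hw1 Hw0] Hw].
  set (w := LambertW (- x)) in *.
  assert (HT : x * exp (- w) = - w).
  { replace x with (- (w * exp w)) by lra. rewrite Ropp_mult_distr_l, Rmult_assoc, <- exp_plus.
    replace (w + - w) with 0 by ring. rewrite exp_0. ring. }
  pose proof (tree_sum_fixed_point_bound x (- w) ltac:(lra) HT ltac:(lra) N).
  apply Rmult_le_reg_l with x; [lra |]. replace (x * (- w / x)) with (- w) by (field; lra). auto.
Qed.

(** * Comparison of the coefficients C_n with a_n tau^(n-1) *)

(* Integrating factor: if y' = a y + h with h >= 0 and y(t0) >= 0, then y >= 0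
   (the function y exp(-A), with A' = a, is nondecreasing). *)
Lemma linear_ode_nonneg (y a h A : R -> R) t0 u : t0 < u ->
  (forall s, t0 <= s <= u -> continuity_pt y s) ->
  (forall s, t0 <= s <= u -> continuity_pt A s) ->
  (forall s, t0 < s < u -> derivable_pt_lim A s (a s)) ->
  (forall s, t0 < s < u -> derivable_pt_lim y s (a s * y s + h s)) ->
  (forall s, t0 < s < u -> 0 <= h s) ->
  0 <= y t0 -> 0 <= y u.
Proof.
  intros Hu Cy CA DA Dy Hh Hy0.
  assert (Hmono : y t0 * exp (- A t0) <= y u * exp (- A u)).
  { apply (nondecreasing_of_deriv_nonneg (fun s => y s * exp (- A s)) (fun s => h s * exp (- A s))); auto.
    - intros s Hs. apply continuity_pt_mult; auto.
      apply (continuity_pt_comp (fun s => - A s) exp); [apply continuity_pt_opp; auto |].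
      apply derivable_continuous_pt, derivable_pt_exp.
    - intros s Hs.
      replace (h s * exp (- A s)) with ((a s * y s + h s) * exp (- A s) + y s * (- a s * exp (- A s))) by ring.
      apply (derivable_pt_lim_mult y (fun s => exp (- A s))); auto.
      apply (derivable_pt_lim_exp_comp (fun s => - A s)), derivable_pt_lim_opp; auto.
    - intros s Hs. apply Rmult_le_pos; [auto | apply Rlt_le, exp_pos]. }
  pose proof (exp_pos (- A t0)). pose proof (exp_pos (- A u)). nra.
Qed.

(* Clamping to [a, b] turns continuity within [a, b] into continuity. *)
Definition clamp (a b x : R) : R := Rmax a (Rmin b x).

Lemma clamp_id a b x : a <= x <= b -> clamp a b x = x.
Proof. intros H. unfold clamp, Rmax, Rmin. repeat destruct Rle_dec; lra. Qed.

Lemma clamp_cont (f : R -> R) a b : a <= b -> (forall s, a <= s <= b -> cont_on_at f a b s) ->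
  forall x, a <= x <= b -> continuity_pt (fun y => f (clamp a b y)) x.
Proof.
  intros Hab Hf x Hx eps He.
  destruct (Hf x Hx eps He) as [alp [Halp H]]. exists alp. split; auto.
  intros y [_ Hy]. simpl in *. unfold R_dist in *. rewrite (clamp_id a b x Hx).
  apply H. split.
  - unfold clamp, Rmax, Rmin. repeat destruct Rle_dec; lra.
  - simpl. unfold R_dist. eapply Rle_lt_trans; [| exact Hy].
    rewrite <- (clamp_id a b x Hx) at 1.
    unfold clamp, Rmax, Rmin, Rabs. repeat destruct Rle_dec; repeat destruct Rcase_abs; lra.
Qed.

Lemma clamp_derivable (f : R -> R) a b x l : a < x < b -> derivable_pt_lim f x l ->
  derivable_pt_lim (fun y => f (clamp a b y)) x l.
Proof.
  intros Hx H. apply is_derive_Reals. apply is_derive_Reals in H.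
  apply (is_derive_ext_loc f); auto.
  generalize (locally_between a b x Hx). apply filter_imp. intros y Hy. rewrite clamp_id; auto; lra.
Qed.

Section Comparison.
Variables (t0 t c : R) (C : nat -> R -> R) (B G tau_fn Bprim : R -> R).
Hypothesis t0_lt_t : t0 < t.
Hypothesis c_ge_1 : 1 <= c.
Hypothesis B_nonneg : forall s, t0 <= s <= t -> 0 <= B s.
Hypothesis G_nonneg : forall s, t0 <= s <= t -> 0 <= G s.
Hypothesis tau_nonneg : forall s, t0 <= s <= t -> 0 <= tau_fn s.
Hypothesis tau_t0 : tau_fn t0 = 0.
Hypothesis tau_deriv : forall s, t0 < s < t -> derivable_pt_lim tau_fn s (c * B s * tau_fn s + G s).
Hypothesis tau_cont : forall s, t0 <= s <= t -> continuity_pt tau_fn s.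
Hypothesis Bprim_deriv : forall s, t0 < s < t -> derivable_pt_lim Bprim s (B s).
Hypothesis Bprim_cont : forall s, t0 <= s <= t -> continuity_pt Bprim s.
Hypothesis C_1 : forall s, t0 <= s <= t -> C 1%nat s = 1.
Hypothesis C_cont : forall n s, (2 <= n)%nat -> t0 <= s <= t -> cont_on_at (C n) t0 t s.
Hypothesis C_ode : forall n s, (2 <= n)%nat -> t0 < s < t ->
  derivable_pt_lim (C n) s
    (INR (n - 1) * B s * C n s + INR n * G s / 2 * sum_f_R0 (fun j => C (S j) s * C (n - S j)%nat s) (n - 2)).
Hypothesis C_init : forall n, (2 <= n)%nat -> C n t0 = 0.

Definition coef_bound (n : nat) : Prop :=
  forall u, t0 <= u <= t -> 0 <= C n u <= tree_coef n * tau_fn u ^ (n - 1).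

Lemma quadratic_term_bounds m : (forall j, (1 <= j <= S m)%nat -> coef_bound j) ->
  forall s, t0 <= s <= t ->
  0 <= sum_f_R0 (fun j => C (S j) s * C (S (S m) - S j)%nat s) m
    <= sum_f_R0 (fun j => tree_coef (S j) * tree_coef (S (S m) - S j)) m * tau_fn s ^ m.
Proof.
  intros IH s Hs. split.
  - apply sum_nonneg. intros j Hj.
    apply Rmult_le_pos; [apply (IH (S j)) | apply (IH (S (S m) - S j)%nat)]; auto; lia.
  - rewrite Rmult_comm, scal_sum. apply sum_Rle. intros j Hj.
    destruct (IH (S j) ltac:(lia) s Hs) as [H1 H2].
    destruct (IH (S (S m) - S j)%nat ltac:(lia) s Hs) as [H3 H4].
    replace (S j - 1)%nat with j in H2 by lia.
    replace (S (S m) - S j - 1)%nat with (m - j)%nat in H4 by lia.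
    replace (tau_fn s ^ m) with (tau_fn s ^ j * tau_fn s ^ (m - j)) by (rewrite <- pow_add; f_equal; lia).
    apply Rle_trans with ((tree_coef (S j) * tau_fn s ^ j) * (tree_coef (S (S m) - S j) * tau_fn s ^ (m - j)));
      [apply Rmult_le_compat; auto | right; ring].
Qed.

Definition clamped_coef (n : nat) (y : R) : R := C n (clamp t0 t y).

Lemma clamped_coef_cont n s : (2 <= n)%nat -> t0 <= s <= t -> continuity_pt (clamped_coef n) s.
Proof. intros Hn Hs. apply clamp_cont; [lra | intros; apply C_cont; auto | exact Hs]. Qed.

Lemma clamped_coef_t0 n : (2 <= n)%nat -> clamped_coef n t0 = 0.
Proof. intros Hn. unfold clamped_coef. rewrite clamp_id by lra. apply C_init; auto. Qed.

Lemma clamped_coef_derivable m s : t0 < s < t ->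
  derivable_pt_lim (clamped_coef (S (S m))) s
    (INR (S m) * B s * clamped_coef (S (S m)) s
     + INR (S (S m)) * G s / 2 * sum_f_R0 (fun j => C (S j) s * C (S (S m) - S j)%nat s) m).
Proof.
  intros Hs. unfold clamped_coef. rewrite clamp_id by lra. apply clamp_derivable; auto.
  pose proof (C_ode (S (S m)) s ltac:(lia) Hs) as H.
  replace (S (S m) - 1)%nat with (S m) in H by lia. replace (S (S m) - 2)%nat with m in H by lia. exact H.
Qed.

(* The integrating factor exp(-(n-1) Bprim) used for the equation of C_n. *)
Lemma weight_derivable m s : t0 < s < t -> derivable_pt_lim (fun s => INR m * Bprim s) s (INR m * B s).
Proof. intros Hs. apply (derivable_pt_lim_scal Bprim), Bprim_deriv; auto. Qed.

Lemma weight_cont m s : t0 <= s <= t -> continuity_pt (fun s => INR m * Bprim s) s.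
Proof. intros Hs. apply (continuity_pt_scal Bprim), Bprim_cont; auto. Qed.

(* Lower bound: the quadratic source term is nonnegative. *)
Lemma coef_lower m u : (forall j, (1 <= j <= S m)%nat -> coef_bound j) -> t0 < u <= t ->
  0 <= C (S (S m)) u.
Proof.
  intros IH Hu. pose proof (quadratic_term_bounds m IH) as HQ.
  replace (C (S (S m)) u) with (clamped_coef (S (S m)) u) by (unfold clamped_coef; rewrite clamp_id; lra).
  apply (linear_ode_nonneg _ (fun s => INR (S m) * B s)
           (fun s => INR (S (S m)) * G s / 2 * sum_f_R0 (fun j => C (S j) s * C (S (S m) - S j)%nat s) m)
           (fun s => INR (S m) * Bprim s) t0 u);
    [lra | intros s Hs; apply clamped_coef_cont; [lia | lra] | intros; apply weight_cont; lra
    | intros; apply weight_derivable; lra | intros; apply clamped_coef_derivable; lra |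
    | rewrite clamped_coef_t0 by lia; lra].
  intros s Hs. pose proof (G_nonneg s ltac:(lra)). destruct (HQ s ltac:(lra)) as [HQ0 _].
  pose proof (pos_INR (S (S m))).
  replace (INR (S (S m)) * G s / 2 * _) with (INR (S (S m)) / 2 * G s * sum_f_R0 (fun j => C (S j) s * C (S (S m) - S j)%nat s) m) by field.
  apply Rmult_le_pos; [apply Rmult_le_pos |]; lra.
Qed.

(* Upper bound: the gap D = a_n tau^(n-1) - C_n satisfies D' = (n-1) B D + h with
   h = (n-1) a_n (c-1) B tau^(n-1) + G (n/2) (sum a_j a_(n-j) tau^(n-2) - sum C_j C_(n-j)) >= 0,
   by the recurrence (n-1) a_n = n/2 sum a_j a_(n-j). *)
Lemma coef_upper m u : (forall j, (1 <= j <= S m)%nat -> coef_bound j) -> t0 < u <= t ->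
  C (S (S m)) u <= tree_coef (S (S m)) * tau_fn u ^ S m.
Proof.
  intros IH Hu. set (n := S (S m)).
  set (Q := fun s => sum_f_R0 (fun j => C (S j) s * C (n - S j)%nat s) m).
  set (Qa := sum_f_R0 (fun j => tree_coef (S j) * tree_coef (n - S j)) m).
  assert (HQ : forall s, t0 <= s <= t -> 0 <= Q s <= Qa * tau_fn s ^ m) by exact (quadratic_term_bounds m IH).
  assert (HA : INR (S m) * tree_coef n = INR n / 2 * Qa).
  { pose proof (tree_coef_rec n ltac:(unfold n; lia)) as H.
    replace (n - 1)%nat with (S m) in H by (unfold n; lia). replace (n - 2)%nat with m in H by (unfold n; lia). exact H. }
  set (D := fun s => tree_coef n * tau_fn s ^ S m - clamped_coef n s).
  set (h := fun s => INR (S m) * tree_coef n * (c - 1) * B s * tau_fn s ^ S m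
                     + G s * (INR n / 2 * Qa * tau_fn s ^ m - INR n / 2 * Q s)).
  assert (HD : 0 <= D u).
  { apply (linear_ode_nonneg D (fun s => INR (S m) * B s) h (fun s => INR (S m) * Bprim s) t0 u);
      [lra | | intros; apply weight_cont; lra | intros; apply weight_derivable; lra | | |].
    - intros s Hs. apply continuity_pt_minus; [| apply clamped_coef_cont; [unfold n; lia | lra]].
      apply continuity_pt_scal, (continuity_pt_comp tau_fn (fun x => x ^ S m)); [apply tau_cont; lra |].
      apply derivable_continuous_pt, derivable_pt_pow.
    - intros s Hs.
      replace (INR (S m) * B s * D s + h s)
        with (tree_coef n * (INR (S m) * (c * B s * tau_fn s + G s) * tau_fn s ^ pred (S m))
              - (INR (S m) * B s * clamped_coef n s + INR n * G s / 2 * Q s))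
        by (unfold D, h; rewrite <- HA; simpl; field).
      apply derivable_pt_lim_minus; [| apply clamped_coef_derivable; lra].
      apply (derivable_pt_lim_scal (fun s => tau_fn s ^ S m)).
      apply is_derive_Reals, is_derive_pow, is_derive_Reals, tau_deriv; lra.
    - intros s Hs. unfold h. pose proof (HQ s ltac:(lra)).
      pose proof (B_nonneg s ltac:(lra)). pose proof (G_nonneg s ltac:(lra)).
      pose proof (pow_le _ (S m) (tau_nonneg s ltac:(lra))). pose proof (pos_INR n).
      assert (0 <= INR (S m) * tree_coef n) by (apply Rmult_le_pos; [apply pos_INR | apply tree_coef_nonneg]).
      assert (0 <= INR n / 2 * Qa * tau_fn s ^ m - INR n / 2 * Q s)
        by (replace (INR n / 2 * Qa * tau_fn s ^ m - INR n / 2 * Q s) with (INR n / 2 * (Qa * tau_fn s ^ m - Q s)) by ring;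
            apply Rmult_le_pos; lra).
      apply Rplus_le_le_0_compat; apply Rmult_le_pos; try lra.
      apply Rmult_le_pos; [| lra]. apply Rmult_le_pos; lra.
    - unfold D. rewrite clamped_coef_t0, tau_t0 by (unfold n; lia). simpl. lra. }
  unfold D, clamped_coef in HD. rewrite clamp_id in HD by lra. lra.
Qed.

Lemma coef_bound_step m : (forall j, (1 <= j <= S m)%nat -> coef_bound j) -> coef_bound (S (S m)).
Proof.
  intros IH u Hu. replace (S (S m) - 1)%nat with (S m) by lia.
  destruct (Req_dec u t0) as [-> | Hut0].
  - rewrite C_init, tau_t0 by lia. simpl. rewrite Rmult_0_l, Rmult_0_r. lra.
  - split; [apply coef_lower | apply coef_upper]; auto; lra.
Qed.

Lemma coef_bounds n : (1 <= n)%nat -> coef_bound n.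
Proof.
  induction n as [n IH] using (well_founded_induction Wf_nat.lt_wf). intros Hn.
  destruct n as [|[|m]]; [lia | |].
  - intros u Hu. rewrite C_1, tree_coef_1 by auto. simpl. lra.
  - apply coef_bound_step. intros j Hj. apply IH; lia.
Qed.

End Comparison.

Lemma nonneg_series_le (f : nat -> R) M : (forall n, 0 <= f n) -> (forall N, sum_f_R0 f N <= M) ->
  exists l, infinite_sum f l /\ l <= M.
Proof.
  intros Hf HM.
  assert (Hgr : Un_growing (sum_f_R0 f)) by (intros N; rewrite tech5; pose proof (Hf (S N)); lra).
  assert (Hub : has_ub (sum_f_R0 f)) by (exists M; intros y [N ->]; apply HM).
  destruct (growing_cv _ Hgr Hub) as [l Hl]. exists l. split; [exact Hl |].
  apply is_lim_seq_Reals in Hl. apply (is_lim_seq_le _ (fun _ => M) l M HM Hl (is_lim_seq_const M)).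
Qed.

Theorem proposition3p5 (beta t0 t : R) (C : nat -> R -> R) :
  0 < beta -> 0 < t0 -> t0 < t ->
  (* C_1 = 1 on [t0,t] *)
  (forall s, t0 <= s <= t -> C 1%nat s = 1) ->
  (* each C_n is continuous on [t0,t] *)
  (forall n s, (2 <= n)%nat -> t0 <= s <= t -> cont_on_at (C n) t0 t s) ->
  (* ODE on (t0,t) for n >= 2 *)
  (forall n s, (2 <= n)%nat -> t0 < s < t ->
     derivable_pt_lim (C n) s
       (INR (n - 1) * Bf beta s * C n s
        + INR n * Gam beta s / 2 *
          sum_f_R0 (fun j => C (S j) s * C (n - S j)%nat s) (n - 2))) ->
  (* initial conditions *)
  (forall n, (2 <= n)%nat -> C n t0 = 0) ->
  forall (k : nat) (z : R), (1 <= k)%nat -> 0 <= z ->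
    exp 1 * z * tau beta k t0 t < 1 ->
    exists Theta : R,
      infinite_sum (fun n => C (S n) t * z ^ n) Theta /\
      Theta <= negWq (tau beta k t0 t * z).
Proof.
  intros Hb Ht0 Htt HC1 Hcont Hode Hinit k z Hk Hz Hlt.
  rewrite tau_eq in Hlt |- * by lra.
  set (c := (INR k + 1) / INR k) in *.
  assert (Hc : 1 <= c).
  { assert (1 <= INR k) by (apply (le_INR 1); auto).
    unfold c. apply Rmult_le_reg_r with (INR k); [lra |]. field_simplify; lra. }
  pose proof (coef_bounds t0 t c C (Bf beta) (Gam beta) (tau_sol beta t0 c) (Bint beta t0) Htt Hc
    ltac:(intros; apply Bf_nonneg; lra) ltac:(intros; apply Gam_nonneg; lra)
    ltac:(intros; apply tau_sol_nonneg; lra) (tau_sol_t0 beta t0 c)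
    ltac:(intros; apply tau_sol_derivable; lra) ltac:(intros; apply tau_sol_cont; lra)
    ltac:(intros; apply Bint_derivable; lra) ltac:(intros; apply Bint_cont; lra)
    HC1 Hcont Hode Hinit) as Hcoef.
  set (T := tau_sol beta t0 c t) in *.
  assert (HT : 0 <= T) by (apply tau_sol_nonneg; lra).
  assert (Hterm : forall n, 0 <= C (S n) t * z ^ n <= tree_coef (S n) * (T * z) ^ n).
  { intros n. destruct (Hcoef (S n) ltac:(lia) t ltac:(lra)) as [H1 H2].
    replace (S n - 1)%nat with n in H2 by lia. rewrite Rpow_mult_distr.
    pose proof (pow_le z n Hz). split; [nra |].
    rewrite <- Rmult_assoc. apply Rmult_le_compat_r; auto. }
  apply nonneg_series_le; [intros n; apply Hterm |].
  intros N. eapply Rle_trans; [| apply (tree_sum_le_negWq (T * z)); nra].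
  apply sum_Rle. intros n _. apply Hterm.
Qed.
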